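(* Thompson's groups $F$, $T$ and $V$ are intersection-saturated.
   Context: For an integer $n\geq 1$ write $[n]=\{1,\dots,n\}$. An $n$-configuration is a map $c\colon \mathcal{P}([n])\setminus\{\emptyset\}\to\{0,1\}$. An $n$-configuration $c$ is realisable in a group $G$ if there exist subgroups $H_1,\dots,H_n\leq G$ such that for every non-empty subset $I\subseteq[n]$, the subgroup $\bigcap_{i\in I}H_i$ is finitely generated if and only if $c(I)=0$. A group $G$ is intersection-saturated if for every $n\geq 1$, every $n$-configuration is realisable in $G$. *)

From mathcomp Require Import all_boot.
From Stdlib Require Import Reals List.

Set Implicit Arguments.
Unset Strict Implicit.
Unset Printing Implicit Defensive.

(* A (concrete) group is a set G of self-maps of a type X, with
   composition as product and the identity map as unit. *)
Definition compf {X : Type} (f g : X -> X) : X -> X := fun x => f (g x).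
Definition idf {X : Type} : X -> X := fun x => x.

Definition is_subgroup {X : Type} (G H : (X -> X) -> Prop) : Prop :=
  (forall f, H f -> G f) /\
  H idf /\
  (forall f g, H f -> H g -> H (compf f g)) /\
  (forall f, H f -> exists g, H g /\ compf f g = idf /\ compf g f = idf).

Inductive gen_by {X : Type} (S : (X -> X) -> Prop) : (X -> X) -> Prop :=
| gen_id : gen_by S idf
| gen_elt : forall s, S s -> gen_by S s
| gen_inv : forall s t, S s -> compf s t = idf -> compf t s = idf -> gen_by S t
| gen_comp : forall f g, gen_by S f -> gen_by S g -> gen_by S (compf f g).

Definition fin_gen {X : Type} (H : (X -> X) -> Prop) : Prop :=
  exists l : list (X -> X),
    (forall g, In g l -> H g) /\ (forall h, H h -> gen_by (fun g => In g l) h).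

Definition bigcapH {X : Type} {n : nat} (Hs : 'I_n -> (X -> X) -> Prop)
  (I : {set 'I_n}) : (X -> X) -> Prop :=
  fun f => forall i, i \in I -> Hs i f.

(* n-configurations: maps from subsets of 'I_n (= [n], reindexed from 0)
   to bool; the value on the empty set is irrelevant. *)
Definition realisable {X : Type} (G : (X -> X) -> Prop) (n : nat)
  (c : {set 'I_n} -> bool) : Prop :=
  exists Hs : 'I_n -> (X -> X) -> Prop,
    (forall i, is_subgroup G (Hs i)) /\
    (forall I : {set 'I_n}, I != set0 ->
        (fin_gen (bigcapH Hs I) <-> c I = false)).

Definition intersection_saturated {X : Type} (G : (X -> X) -> Prop) : Prop :=
  forall n : nat, (1 <= n)%N -> forall c : {set 'I_n} -> bool, realisable G c.

Local Open Scope R_scope.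

Definition dyadic (x : R) : Prop :=
  exists (k : Z) (m : nat), x = IZR k / 2 ^ m.

(* A dyadic subdivision 0 = a 0 < a 1 < ... < a m = 1 with affine pieces
   x |-> 2^(e i) * x + b i, dyadic breakpoints and intercepts.
   [closed] selects closed pieces [a i, a (i+1)] (for F) or half-open
   pieces [a i, a (i+1)) (for T and V). *)
Definition dyadic_PL (closed : bool) (f : R -> R) : Prop :=
  exists (m : nat) (a : nat -> R) (e : nat -> Z) (b : nat -> R),
    a 0%nat = 0 /\ a m = 1 /\
    (forall i, (i < m)%nat -> a i < a (S i)) /\
    (forall i, (i <= m)%nat -> dyadic (a i)) /\
    (forall i, (i < m)%nat -> dyadic (b i)) /\
    (forall i x, (i < m)%nat -> a i <= x ->
        (if closed then x <= a (S i) else x < a (S i)) ->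
        f x = powerRZ 2 (e i) * x + b i).

(* Thompson's group F: piecewise linear homeomorphisms of [0,1] with
   finitely many breakpoints, all dyadic, and slopes powers of 2
   (extended by the identity outside [0,1]). *)
Definition thompsonF (f : R -> R) : Prop :=
  (forall x, (x < 0 \/ 1 < x) -> f x = x) /\
  (forall x, 0 <= x <= 1 -> 0 <= f x <= 1) /\
  (forall x y, 0 <= x <= 1 -> 0 <= y <= 1 -> f x = f y -> x = y) /\
  (forall y, 0 <= y <= 1 -> exists x, 0 <= x <= 1 /\ f x = y) /\
  dyadic_PL true f.

(* Thompson's group V: right-continuous piecewise linear bijections of
   [0,1) with finitely many breakpoints, all dyadic, slopes powers of 2,
   mapping dyadics to dyadics (extended by the identity outside [0,1)). *)
Definition thompsonV (f : R -> R) : Prop :=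
  (forall x, (x < 0 \/ 1 <= x) -> f x = x) /\
  (forall x, 0 <= x < 1 -> 0 <= f x < 1) /\
  (forall x y, 0 <= x < 1 -> 0 <= y < 1 -> f x = f y -> x = y) /\
  (forall y, 0 <= y < 1 -> exists x, 0 <= x < 1 /\ f x = y) /\
  dyadic_PL false f.

Definition cyc (x y z : R) : Prop :=
  (x < y < z) \/ (y < z < x) \/ (z < x < y).

(* Thompson's group T: the elements of V that are (orientation-preserving)
   homeomorphisms of the circle [0,1) = R/Z, i.e. preserve cyclic order. *)
Definition thompsonT (f : R -> R) : Prop :=
  thompsonV f /\
  (forall x y z, 0 <= x -> x < y -> y < z -> z < 1 -> cyc (f x) (f y) (f z)).

(* Each of F, T and V contains the dyadic homeomorphisms of [0,1]: increasing
   homeomorphisms, fixing everything outside [0,1], that are affine with slope a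
   power of 2 on every cell of some dyadic grid.  It suffices to realise every
   configuration among those.  The knots 1/2^k and 1 - 1/2^k cut (0,1) into
   blocks; x0^-n moves every block n steps, and doing this independently inside
   the blocks embeds finite powers of the lamplighter group Z wr Z.
   For a configuration c take one factor (Z wr Z) x Z^J for each J with c J = 1,
   and let H_i be trivial on the factors with i notin J and cut out by
   cursor(w) = sum_(l in J) t_l and t_i = 0 on the others.  The intersection of
   the H_i, i in I, is the product over the J containing I of
   {(w, t) | cursor(w) = sum_(l in J \ I) t_l}: for J = I this is the base group
   of Z wr Z, which is not finitely generated, and for J strictly larger it is
   generated by the lamp at 0 and the elements (cursor 1, t_l = 1), l in J \ I. *)

From Stdlib Require Import Reals Lra Lia ZArith ClassicalEpsilon FunctionalExtensionality Classical.
From HB Require Import structures.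
From mathcomp Require Import all_boot zify ssrZ.

Set Implicit Arguments.
Unset Strict Implicit.
Unset Printing Implicit Defensive.

HB.instance Definition _ := Monoid.isComLaw.Build Z 0%Z Z.add Z.add_assoc Z.add_comm Z.add_0_l.

Local Open Scope R_scope.

Lemma pow2_gt0 (n : nat) : 0 < 2 ^ n.
Proof. by apply: pow_lt; lra. Qed.

Lemma pow2_ge_succ (n : nat) : INR n + 1 <= 2 ^ n.
Proof.
elim: n => [|n IH]; first by rewrite /=; lra.
rewrite S_INR /=; have := pos_INR n; lra.
Qed.

Lemma INR_pow2 (n : nat) : INR (Nat.pow 2 n) = 2 ^ n.
Proof. by rewrite pow_INR /=; congr (_ ^ _); lra. Qed.

Lemma pow2_inv_lt (e : R) : 0 < e -> exists N : nat, / 2 ^ N < e.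
Proof.
move=> e_gt0; have [N [invN_lt N_gt0]] := archimed_cor1 e e_gt0.
exists N; apply: Rle_lt_trans invN_lt; apply: Rinv_le_contravar.
- by apply: lt_0_INR; lia.
- by have := pow2_ge_succ N; lra.
Qed.

Lemma pow2_sub (m n : nat) : (n <= m)%N -> 2 ^ m = 2 ^ n * 2 ^ (m - n).
Proof. by move=> le_nm; rewrite -pow_add; congr (_ ^ _); lia. Qed.

(** * Dyadic homeomorphisms of [0,1] *)

(* The bound on [k] makes
   composites grid-affine again (grid_affine_comp). *)
Definition grid_affine (N : nat) (f : R -> R) : Prop :=
  forall i : nat, INR i + 1 <= 2 ^ N ->
  exists (k : nat) (b : R) (z : Z), (k <= N + N)%N /\ b * 2 ^ N = IZR z /\
    forall x, INR i <= x * 2 ^ N <= INR i + 1 -> f x = 2 ^ k / 2 ^ N * x + b.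

Record dyadic_homeo (f : R -> R) : Prop := DyadicHomeo {
  dh_fix_out : forall x, x < 0 \/ 1 < x -> f x = x;
  dh_incr : forall x y, 0 <= x -> x < y -> y <= 1 -> f x < f y;
  dh_range : forall x, 0 <= x <= 1 -> 0 <= f x <= 1;
  dh_onto : forall y, 0 <= y <= 1 -> exists x, 0 <= x <= 1 /\ f x = y;
  dh_grid : exists N, grid_affine N f }.

Section DyadicHomeoFacts.
Variable f : R -> R.
Hypothesis f_dh : dyadic_homeo f.

Lemma dyadic_homeo0 : f 0 = 0.
Proof.
have [x [x01 fx0]] := dh_onto f_dh (y := 0) ltac:(lra).
case: (Rle_lt_or_eq_dec 0 x (proj1 x01)) => [x_gt0 | x0]; last by rewrite {1}x0.
have := dh_incr f_dh (x := 0) (y := x) ltac:(lra) ltac:(lra) ltac:(lra).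
have := dh_range f_dh (x := 0) ltac:(lra); lra.
Qed.

Lemma dyadic_homeo1 : f 1 = 1.
Proof.
have [x [x01 fx1]] := dh_onto f_dh (y := 1) ltac:(lra).
case: (Rle_lt_or_eq_dec x 1 (proj2 x01)) => [x_lt1 | x1]; last by rewrite -{1}x1.
have := dh_incr f_dh (x := x) (y := 1) ltac:(lra) ltac:(lra) ltac:(lra).
have := dh_range f_dh (x := 1) ltac:(lra); lra.
Qed.

Lemma dyadic_homeo_open s : 0 < s < 1 -> 0 < f s < 1.
Proof.
move=> s01; have := dh_incr f_dh (x := 0) (y := s) ltac:(lra) ltac:(lra) ltac:(lra).
have := dh_incr f_dh (x := s) (y := 1) ltac:(lra) ltac:(lra) ltac:(lra).
by rewrite dyadic_homeo0 dyadic_homeo1; lra.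
Qed.

Lemma dyadic_homeo_inj x y : 0 <= x <= 1 -> 0 <= y <= 1 -> f x = f y -> x = y.
Proof.
move=> x01 y01 fxy; case: (Rtotal_order x y) => [lt_xy | [// | lt_yx]].
- by have := dh_incr f_dh (x := x) (y := y) ltac:(lra) lt_xy ltac:(lra); lra.
- by have := dh_incr f_dh (x := y) (y := x) ltac:(lra) lt_yx ltac:(lra); lra.
Qed.

End DyadicHomeoFacts.

Lemma cell_in_coarser_cell (M K j : nat) : (K <= M)%N -> exists i : nat,
  (forall x, INR j <= x * 2 ^ M <= INR j + 1 -> INR i <= x * 2 ^ K <= INR i + 1) /\
  (INR j + 1 <= 2 ^ M -> INR i + 1 <= 2 ^ K).
Proof.
move=> le_KM; set d := Nat.pow 2 (M - K).
have d_neq0 : d <> 0%N by apply: Nat.pow_nonzero.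
exists (Nat.div j d).
have /le_INR lo := Nat.Div0.mul_div_le j d.
have j_mod := Nat.div_mod j d d_neq0; have := Nat.mod_upper_bound j d d_neq0.
move=> mod_lt; have /le_INR hi : (j + 1 <= d * (Nat.div j d + 1))%coq_nat by lia.
rewrite mult_INR in lo; rewrite mult_INR !plus_INR /= in hi.
have pow_M : 2 ^ M = INR d * 2 ^ K by rewrite INR_pow2 Rmult_comm -(pow2_sub le_KM).
have d_gt0 : 0 < INR d by apply: lt_0_INR; lia.
have := pow2_gt0 K; rewrite pow_M => pow_K_gt0; split.
- move=> x x_cell; split; apply: (Rmult_le_reg_l (INR d)) => //; nra.
- move=> j_lt; have /INR_lt j_lt' : INR j < INR (d * Nat.pow 2 K) by rewrite mult_INR INR_pow2; lra.
  have /le_INR : (Nat.div j d + 1 <= Nat.pow 2 K)%coq_nat.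
    by have := Nat.Div0.div_lt_upper_bound _ _ _ j_lt'; lia.
  by rewrite plus_INR INR_pow2 /=; lra.
Qed.

Lemma grid_point01 (N : nat) t : 0 <= t <= 2 ^ N -> 0 <= t / 2 ^ N <= 1.
Proof.
move=> t_range; have N_gt0 := pow2_gt0 N.
have inv_gt0 := Rinv_0_lt_compat _ N_gt0; have := Rinv_r _ (Rgt_not_eq _ _ N_gt0).
rewrite /Rdiv; nra.
Qed.

Lemma dyadic_affine_rescaled (N Nf k : nat) (b : R) (z : Z) x :
  (k <= N)%N -> b * 2 ^ Nf = IZR z ->
  (2 ^ k / 2 ^ Nf * x + b) * 2 ^ (N + Nf - k) =
  x * 2 ^ N + IZR (z * Z.of_nat (Nat.pow 2 (N - k))).
Proof.
move=> le_kN bz; rewrite mult_IZR -INR_IZR_INZ INR_pow2 -bz.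
have -> : (N + Nf - k)%N = (Nf + (N - k))%N by lia.
rewrite pow_add (pow2_sub le_kN); have Nf_gt0 := pow2_gt0 Nf; field; lra.
Qed.

Lemma affine_cell_image (N M : nat) (h : R -> R) (i : nat) (c : Z) :
  (forall x, 0 <= x <= 1 -> 0 <= h x <= 1) -> INR i + 1 <= 2 ^ N ->
  (forall x, INR i <= x * 2 ^ N <= INR i + 1 -> h x * 2 ^ M = x * 2 ^ N + IZR c) ->
  exists j : nat, INR j + 1 <= 2 ^ M /\
    forall x, INR i <= x * 2 ^ N <= INR i + 1 -> INR j <= h x * 2 ^ M <= INR j + 1.
Proof.
move=> h01 i_lt h_cell; have N_gt0 := pow2_gt0 N; have := pos_INR i => i_ge0.
have divK t : t / 2 ^ N * 2 ^ N = t by field; lra.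
have h_node t : INR i <= t <= INR i + 1 -> 0 <= t + IZR c <= 2 ^ M.
  move=> t_range; rewrite -(divK t) -h_cell ?divK //.
  have := h01 (t / 2 ^ N) (@grid_point01 N t ltac:(lra)); have := pow2_gt0 M; nra.
have c_lo := h_node (INR i) ltac:(lra); have c_hi := h_node (INR i + 1) ltac:(lra).
have i_c_ge0 : (0 <= Z.of_nat i + c)%Z by apply: le_IZR; rewrite plus_IZR -INR_IZR_INZ; lra.
exists (Z.to_nat (Z.of_nat i + c)).
rewrite INR_IZR_INZ Z2Nat.id // plus_IZR -INR_IZR_INZ; split; first lra.
by move=> x x_cell; rewrite h_cell //; lra.
Qed.

Lemma grid_affine_comp Nf Ng f g : dyadic_homeo f -> grid_affine Nf f -> grid_affine Ng g ->
  grid_affine (Nf + Nf + Ng) (fun x => g (f x)).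
Proof.
move=> f_dh f_grid g_grid i i_lt.
have [i_f [in_i_f i_f_lt]] := @cell_in_coarser_cell (Nf + Nf + Ng) Nf i ltac:(lia).
have [kf [bf [zf [kf_le [bf_z f_aff]]]]] := f_grid i_f (i_f_lt i_lt).
have f_cell x : INR i <= x * 2 ^ (Nf + Nf + Ng) <= INR i + 1 ->
    f x * 2 ^ (Nf + Nf + Ng + Nf - kf) =
    x * 2 ^ (Nf + Nf + Ng) + IZR (zf * Z.of_nat (Nat.pow 2 (Nf + Nf + Ng - kf))).
  by move=> x_cell; rewrite (f_aff x (in_i_f x x_cell)); apply: dyadic_affine_rescaled => //; lia.
have [j [j_lt in_j]] := affine_cell_image (dh_range f_dh) i_lt f_cell.
have [i_g [in_i_g i_g_lt]] := @cell_in_coarser_cell (Nf + Nf + Ng + Nf - kf) Ng j ltac:(lia).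
have [kg [bg [zg [kg_le [bg_z g_aff]]]]] := g_grid i_g (i_g_lt j_lt).
exists (kg + kf + Nf)%N, (2 ^ kg / 2 ^ Ng * bf + bg),
  (Z.of_nat (Nat.pow 2 kg) * zf * Z.of_nat (Nat.pow 2 Nf) +
   zg * Z.of_nat (Nat.pow 2 (Nf + Nf)))%Z.
have Nf_gt0 := pow2_gt0 Nf; have Ng_gt0 := pow2_gt0 Ng.
split; [lia | split].
- rewrite plus_IZR !mult_IZR -!INR_IZR_INZ !INR_pow2 -bf_z -bg_z !pow_add; field; lra.
- move=> x x_cell; rewrite (g_aff _ (in_i_g _ (in_j x x_cell))) (f_aff x (in_i_f x x_cell)).
  rewrite !pow_add; field; lra.
Qed.

Lemma dyadic_homeo_comp f g : dyadic_homeo f -> dyadic_homeo g -> dyadic_homeo (fun x => g (f x)).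
Proof.
move=> f_dh g_dh; split.
- by move=> x x_out; rewrite !dh_fix_out.
- move=> x y x_ge0 lt_xy y_le1; apply: (dh_incr g_dh).
  + by have := dh_range f_dh (x := x) ltac:(lra); lra.
  + exact: (dh_incr f_dh).
  + by have := dh_range f_dh (x := y) ltac:(lra); lra.
- by move=> x x01; apply: (dh_range g_dh); apply: (dh_range f_dh).
- move=> y y01; have [x' [x'01 <-]] := dh_onto g_dh y01.
  by have [x [x01 <-]] := dh_onto f_dh x'01; exists x.
- have [Nf f_grid] := dh_grid f_dh; have [Ng g_grid] := dh_grid g_dh.
  by exists (Nf + Nf + Ng)%N; apply: grid_affine_comp.
Qed.

Lemma dyadic_homeo_id : dyadic_homeo (fun x => x).
Proof.
split => //; try lra; first by move=> y y01; exists y.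
exists 0%N => i _; exists 0%N, 0, 0%Z; split => //; split; first lra.
by move=> x _ /=; lra.
Qed.

Lemma cell_affine_id (N : nat) (h : R -> R) (i : nat) :
  (forall x, INR i <= x * 2 ^ N <= INR i + 1 -> h x = x) ->
  exists (k : nat) (b : R) (z : Z), (k <= N + N)%N /\ b * 2 ^ N = IZR z /\
    forall x, INR i <= x * 2 ^ N <= INR i + 1 -> h x = 2 ^ k / 2 ^ N * x + b.
Proof.
move=> h_id; exists N, 0, 0%Z; split; first lia; split; first lra.
by move=> x x_cell; rewrite h_id //; have N_gt0 := pow2_gt0 N; field; lra.
Qed.

Definition rescale (u : R) (L : nat) (f : R -> R) (x : R) : R :=
  if Rlt_dec u x then
    if Rlt_dec x (u + / 2 ^ L) then u + / 2 ^ L * f ((x - u) * 2 ^ L) else x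
  else x.

Section Rescale.
Variables (u : R) (L : nat) (zu : Z) (f : R -> R).
Hypotheses (u_dyadic : u * 2 ^ L = IZR zu) (u_ge0 : 0 <= u) (u_end : u + / 2 ^ L <= 1).
Hypothesis f_dh : dyadic_homeo f.

Let L_gt0 : 0 < 2 ^ L := pow2_gt0 L.
Let w_gt0 : 0 < / 2 ^ L := Rinv_0_lt_compat _ L_gt0.
Let w_pow : / 2 ^ L * 2 ^ L = 1 := Rinv_l _ (Rgt_not_eq _ _ L_gt0).

Lemma rescale_in x :
  u <= x <= u + / 2 ^ L -> rescale u L f x = u + / 2 ^ L * f ((x - u) * 2 ^ L).
Proof.
move=> x_range; rewrite /rescale; case: Rlt_dec => [lt_ux | ge_ux] /=.
  case: Rlt_dec => [// | ge_x] /=; have -> : x = u + / 2 ^ L by lra.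
  rewrite (_ : (_ - u) * 2 ^ L = 1); last by field; lra.
  by rewrite dyadic_homeo1 //; lra.
have -> : x = u by lra.
rewrite (_ : (u - u) * 2 ^ L = 0); last ring.
by rewrite dyadic_homeo0 //; ring.
Qed.

Lemma rescale_out x : x <= u \/ u + / 2 ^ L <= x -> rescale u L f x = x.
Proof. by move=> x_out; rewrite /rescale; do 2?case: Rlt_dec => ? //=; lra. Qed.

Lemma rescale_arg01 x : u <= x <= u + / 2 ^ L -> 0 <= (x - u) * 2 ^ L <= 1.
Proof. by move=> x_range; split; nra. Qed.

Lemma rescale_in_range x :
  u <= x <= u + / 2 ^ L -> u <= rescale u L f x <= u + / 2 ^ L.
Proof.
move=> x_range; rewrite rescale_in //.
by have := dh_range f_dh (rescale_arg01 x_range); nra.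
Qed.

Lemma rescale_incr x y : 0 <= x -> x < y -> y <= 1 -> rescale u L f x < rescale u L f y.
Proof.
move=> x_ge0 lt_xy y_le1.
have f_incr s t : 0 <= s -> s < t -> t <= 1 -> f s < f t by exact: (dh_incr f_dh).
case: (Rle_dec y u) => [y_le | y_gt]; first by rewrite !rescale_out //; lra.
case: (Rle_dec (u + / 2 ^ L) x) => [x_ge | x_lt]; first by rewrite !rescale_out //; lra.
case: (Rle_dec x u) => [x_le | x_gt]; case: (Rle_dec y (u + / 2 ^ L)) => [y_le' | y_gt'].
- rewrite (rescale_out (x := x)); last lra; rewrite rescale_in; last lra.
  by have := f_incr 0 ((y - u) * 2 ^ L) ltac:(lra) ltac:(nra) ltac:(nra); rewrite dyadic_homeo0 //; nra.
- by rewrite !rescale_out //; lra.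
- rewrite !rescale_in; try lra.
  by have := f_incr ((x - u) * 2 ^ L) ((y - u) * 2 ^ L) ltac:(nra) ltac:(nra) ltac:(nra); nra.
- rewrite (rescale_out (x := y)); last lra.
  by have := @rescale_in_range x ltac:(lra); lra.
Qed.

Lemma grid_affine_rescale Nf : grid_affine Nf f -> grid_affine (Nf + L) (rescale u L f).
Proof.
move=> f_grid i i_lt; have Nf_gt0 := pow2_gt0 Nf; have N_gt0 := pow2_gt0 (Nf + L).
pose U := (zu * Z.of_nat (Nat.pow 2 Nf))%Z.
have U_eq : IZR U = u * 2 ^ (Nf + L).
  by rewrite /U mult_IZR -INR_IZR_INZ INR_pow2 pow_add -u_dyadic; ring.
have w_N : / 2 ^ L * 2 ^ (Nf + L) = 2 ^ Nf by rewrite pow_add; field; lra.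
case: (Z_lt_le_dec (Z.of_nat i) U) => [i_lo | i_lo].
  apply: cell_affine_id => x x_cell; apply: rescale_out; left.
  have /IZR_le : (Z.of_nat i + 1 <= U)%Z by lia.
  by rewrite plus_IZR -INR_IZR_INZ U_eq; nra.
case: (Z_lt_le_dec (Z.of_nat i) (U + Z.of_nat (Nat.pow 2 Nf))) => [i_hi | i_hi]; last first.
  apply: cell_affine_id => x x_cell; apply: rescale_out; right.
  move/IZR_le: i_hi; rewrite plus_IZR -!INR_IZR_INZ INR_pow2 U_eq => i_hi.
  nra.
pose i' := Z.to_nat (Z.of_nat i - U).
have i'_eq : INR i' = INR i - IZR U.
  by rewrite /i' INR_IZR_INZ Z2Nat.id ?minus_IZR -?INR_IZR_INZ //; lia.
have i'_lt : INR i' + 1 <= 2 ^ Nf.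
  have /IZR_le : (Z.of_nat i + 1 <= U + Z.of_nat (Nat.pow 2 Nf))%Z by lia.
  by rewrite !plus_IZR -!INR_IZR_INZ INR_pow2; lra.
have [kf [bf [zf [kf_le [bf_z f_aff]]]]] := f_grid i' i'_lt.
exists (kf + L)%N, (u - 2 ^ kf / 2 ^ Nf * u + / 2 ^ L * bf),
  (zu * Z.of_nat (Nat.pow 2 Nf) - Z.of_nat (Nat.pow 2 kf) * zu + zf)%Z.
split; [lia | split].
  rewrite plus_IZR minus_IZR !mult_IZR -!INR_IZR_INZ !INR_pow2 -bf_z -u_dyadic pow_add.
  by field; lra.
move=> x x_cell.
have x_mid : u <= x <= u + / 2 ^ L.
  move/IZR_le: i_lo; move/IZR_lt: i_hi.
  rewrite plus_IZR -!INR_IZR_INZ INR_pow2 U_eq => i_hi i_lo.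
  split; nra.
rewrite rescale_in // f_aff; first by rewrite !pow_add; field; lra.
by rewrite i'_eq U_eq (_ : (x - u) * 2 ^ L * 2 ^ Nf = x * 2 ^ (Nf + L) - u * 2 ^ (Nf + L));
  [lra | rewrite pow_add; ring].
Qed.

Lemma dyadic_homeo_rescale : dyadic_homeo (rescale u L f).
Proof.
split.
- by move=> x x_out; apply: rescale_out; lra.
- exact: rescale_incr.
- move=> x x01; case: (Rle_dec x u) => [x_le | x_gt]; first by rewrite rescale_out //; lra.
  case: (Rle_dec x (u + / 2 ^ L)) => [x_le' | x_gt']; last by rewrite rescale_out //; lra.
  by have := @rescale_in_range x ltac:(lra); lra.
- move=> y y01; case: (Rle_dec y u) => [y_le | y_gt].
    by exists y; split => //; rewrite rescale_out //; lra.
  case: (Rle_dec y (u + / 2 ^ L)) => [y_le' | y_gt']; last first.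
    by exists y; split => //; rewrite rescale_out //; lra.
  have [t [t01 ft]] := dh_onto f_dh (y := (y - u) * 2 ^ L) ltac:(nra).
  exists (u + / 2 ^ L * t); split; first nra.
  rewrite rescale_in; last nra.
  by rewrite (_ : (u + / 2 ^ L * t - u) * 2 ^ L = t) ?ft; [nra | field; lra].
- by have [Nf f_grid] := dh_grid f_dh; exists (Nf + L)%N; apply: grid_affine_rescale.
Qed.

End Rescale.

Lemma powerRZ2_sub (k N : nat) : powerRZ 2 (Z.of_nat k - Z.of_nat N) = 2 ^ k / 2 ^ N.
Proof. by rewrite /Z.sub powerRZ_add ?powerRZ_neg' -?pow_powerRZ //; lra. Qed.

Lemma grid_affine_dyadic_PL (closed : bool) N f : grid_affine N f -> dyadic_PL closed f.
Proof.
move=> f_grid; have N_gt0 := pow2_gt0 N.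
have cell_piece (i : nat) : exists eb : Z * R, INR i + 1 <= 2 ^ N ->
    dyadic eb.2 /\
    forall x, INR i <= x * 2 ^ N <= INR i + 1 -> f x = powerRZ 2 eb.1 * x + eb.2.
  case: (Rle_dec (INR i + 1) (2 ^ N)) => [i_lt | i_ge]; last first.
    by exists (0%Z, 0).
  have [k [b [z [_ [bz f_aff]]]]] := f_grid i i_lt.
  exists ((Z.of_nat k - Z.of_nat N)%Z, b) => _; split.
    by exists z, N; rewrite /= -bz; field; lra.
  by move=> x x_cell /=; rewrite powerRZ2_sub; apply: f_aff.
have [eb eb_spec] := choice _ cell_piece.
exists (Nat.pow 2 N), (fun i => INR i / 2 ^ N), (fun i => (eb i).1), (fun i => (eb i).2).
have cell_lt i : (i < Nat.pow 2 N)%N -> INR i + 1 <= 2 ^ N.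
  by move=> /ltP/le_INR; rewrite S_INR INR_pow2.
split; first by rewrite /= /Rdiv Rmult_0_l.
split; first by rewrite INR_pow2; field; lra.
split; first by move=> i _; rewrite S_INR; apply: Rmult_lt_compat_r; [apply: Rinv_0_lt_compat|]; lra.
split; first by move=> i _; exists (Z.of_nat i), N; rewrite -INR_IZR_INZ.
split; first by move=> i /cell_lt /eb_spec[].
move=> i x /cell_lt /eb_spec[_ f_aff] x_lo x_hi; apply: f_aff.
have {}x_hi : x <= INR i.+1 / 2 ^ N by case: closed x_hi; lra.
rewrite S_INR in x_hi; split.
- by apply: (Rmult_le_reg_r (/ 2 ^ N)); [apply: Rinv_0_lt_compat | rewrite Rmult_assoc Rinv_r]; lra.
- by apply: (Rmult_le_reg_r (/ 2 ^ N)); [apply: Rinv_0_lt_compat | rewrite Rmult_assoc Rinv_r]; lra.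
Qed.

Lemma dyadic_homeo_thompsonF f : dyadic_homeo f -> thompsonF f.
Proof.
move=> f_dh; have [N f_grid] := dh_grid f_dh.
split; [|split; [|split; [|split]]].
- exact: (dh_fix_out f_dh).
- exact: (@dh_range _ f_dh).
- move=> x y; exact: (dyadic_homeo_inj f_dh).
- exact: (@dh_onto _ f_dh).
- exact: grid_affine_dyadic_PL f_grid.
Qed.

Lemma dyadic_homeo_thompsonV f : dyadic_homeo f -> thompsonV f.
Proof.
move=> f_dh; have [N f_grid] := dh_grid f_dh; have f1 := dyadic_homeo1 f_dh.
split; [|split; [|split; [|split]]]; last exact: grid_affine_dyadic_PL f_grid.
- move=> x [x_lt0 | x_ge1]; first by apply: (dh_fix_out f_dh); left.
  by case: (Rle_lt_or_eq_dec 1 x x_ge1) => [x_gt1 | <- //]; apply: (dh_fix_out f_dh); right.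
- move=> x x01; have := dh_range f_dh (x := x) ltac:(lra).
  by have := dh_incr f_dh (x := x) (y := 1) ltac:(lra) ltac:(lra) ltac:(lra); lra.
- by move=> x y x01 y01; apply: (dyadic_homeo_inj f_dh); lra.
- move=> y y01; have [x [x01 fx]] := dh_onto f_dh (y := y) ltac:(lra).
  exists x; split => //; split; first lra.
  by case: (Rle_lt_or_eq_dec x 1 (proj2 x01)) => // x1; rewrite x1 f1 in fx; lra.
Qed.

Lemma dyadic_homeo_thompsonT f : dyadic_homeo f -> thompsonT f.
Proof.
move=> f_dh; split; first exact: dyadic_homeo_thompsonV.
by move=> x y z x_ge0 lt_xy lt_yz z_lt1; left; split; apply: (dh_incr f_dh); lra.
Qed.

(** * Blocks of (0,1) *)

(* The knots ..., 1/8, 1/4, 1/2, 3/4, 7/8, ... cut (0,1) into the blocks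
   [knot k, knot (k + 1)], k in Z, of length 2^-(block_exp k). *)
Definition knot (k : Z) : R :=
  if (k <=? 0)%Z then / 2 ^ Z.to_nat (1 - k) else 1 - / 2 ^ Z.to_nat (k + 1).

Definition block_exp (k : Z) : nat :=
  if (k <? 0)%Z then Z.to_nat (1 - k) else Z.to_nat (k + 2).

Lemma knot_nonpos k : (k <= 0)%Z -> knot k = / 2 ^ Z.to_nat (1 - k).
Proof. by rewrite /knot => /Z.leb_le ->. Qed.

Lemma knot_nonneg k : (0 <= k)%Z -> knot k = 1 - / 2 ^ Z.to_nat (k + 1).
Proof.
rewrite /knot; case: Z.leb_spec => [k_le0 k_ge0 | //].
have -> : k = 0%Z by lia.
by rewrite /=; field.
Qed.

Lemma block_exp_neg k : (k < 0)%Z -> block_exp k = Z.to_nat (1 - k).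
Proof. by rewrite /block_exp => /Z.ltb_lt ->. Qed.

Lemma block_exp_nonneg k : (0 <= k)%Z -> block_exp k = Z.to_nat (k + 2).
Proof. by rewrite /block_exp => /Z.ltb_ge ->. Qed.

Lemma knot_succ k : knot (k + 1) = knot k + / 2 ^ block_exp k.
Proof.
case: (Z_lt_le_dec k 0) => [k_lt0 | k_ge0].
- rewrite block_exp_neg // !knot_nonpos; try lia.
  have -> : (1 - (k + 1))%Z = (- k)%Z by lia.
  have -> : Z.to_nat (1 - k) = (Z.to_nat (- k)).+1 by lia.
  by rewrite -tech_pow_Rmult; have ? := pow2_gt0 (Z.to_nat (- k)); field; lra.
- rewrite block_exp_nonneg // !knot_nonneg; try lia.
  have -> : Z.to_nat (k + 1 + 1) = (Z.to_nat (k + 1)).+1 by lia.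
  have -> : Z.to_nat (k + 2) = (Z.to_nat (k + 1)).+1 by lia.
  by rewrite -tech_pow_Rmult; have ? := pow2_gt0 (Z.to_nat (k + 1)); field; lra.
Qed.

Lemma block_len_gt0 k : 0 < / 2 ^ block_exp k.
Proof. exact/Rinv_0_lt_compat/pow2_gt0. Qed.

Lemma knot_lt_succ k : knot k < knot (k + 1).
Proof. by rewrite knot_succ; have := block_len_gt0 k; lra. Qed.

Lemma inv_pow2_succ_in01 m : 0 < / 2 ^ m.+1 < 1.
Proof.
split; first exact/Rinv_0_lt_compat/pow2_gt0.
rewrite -Rinv_1; apply: Rinv_lt_contravar; rewrite -tech_pow_Rmult;
  have := pow2_ge_succ m; have := pos_INR m; lra.
Qed.

Lemma knot_in01 k : 0 < knot k < 1.
Proof.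
case: (Z_le_gt_dec k 0) => [k_le0 | k_gt0].
- rewrite knot_nonpos // (_ : Z.to_nat (1 - k) = (Z.to_nat (- k)).+1); last lia.
  exact: inv_pow2_succ_in01.
- rewrite knot_nonneg; last lia.
  rewrite (_ : Z.to_nat (k + 1) = (Z.to_nat k).+1); last lia.
  by have := inv_pow2_succ_in01 (Z.to_nat k); lra.
Qed.

Lemma knot_lt k k' : (k < k')%Z -> knot k < knot k'.
Proof.
move=> lt_kk'; have -> : k' = (k + Z.of_nat (Z.to_nat (k' - k - 1)).+1)%Z by lia.
elim: (Z.to_nat _) => [|d IH].
  by rewrite (_ : (k + Z.of_nat 1)%Z = (k + 1)%Z); [exact: knot_lt_succ | lia].
apply: Rlt_trans IH _; rewrite (_ : (k + Z.of_nat d.+2)%Z = (k + Z.of_nat d.+1 + 1)%Z); last lia.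
exact: knot_lt_succ.
Qed.

Lemma knot_le k k' : (k <= k')%Z -> knot k <= knot k'.
Proof.
move=> le_kk'; case: (Z.eq_dec k k') => [-> | neq]; first lra.
by apply/Rlt_le/knot_lt; lia.
Qed.

Lemma knot_lt_inv k k' : knot k < knot k' -> (k < k')%Z.
Proof. by move=> lt; case: (Z_lt_le_dec k k') => // /knot_le; lra. Qed.

Lemma knot_inj k k' : knot k = knot k' -> k = k'.
Proof.
move=> eq; case: (Z.lt_trichotomy k k') => [/knot_lt | [// | /knot_lt]]; lra.
Qed.

Lemma knot_notin_block j m : ~ (knot j < knot m < knot (j + 1)).
Proof. by case=> /knot_lt_inv lt1 /knot_lt_inv lt2; lia. Qed.

Lemma knot_dyadic k : exists z : Z, knot k * 2 ^ block_exp k = IZR z.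
Proof.
case: (Z_lt_le_dec k 0) => [k_lt0 | k_ge0].
  exists 1%Z; rewrite knot_nonpos; last lia; rewrite block_exp_neg //.
  by rewrite Rinv_l //; have := pow2_gt0 (Z.to_nat (1 - k)); lra.
rewrite knot_nonneg // block_exp_nonneg //.
exists (Z.of_nat (Nat.pow 2 (Z.to_nat (k + 2))) - 2)%Z.
rewrite minus_IZR -INR_IZR_INZ INR_pow2.
rewrite (_ : Z.to_nat (k + 2) = (Z.to_nat (k + 1)).+1); last lia.
by rewrite -tech_pow_Rmult; have ? := pow2_gt0 (Z.to_nat (k + 1)); field; lra.
Qed.

Definition chart (k : Z) (s : R) : R := knot k + / 2 ^ block_exp k * s.
Definition chart_inv (k : Z) (x : R) : R := (x - knot k) * 2 ^ block_exp k.

Lemma chart_invK k s : chart_inv k (chart k s) = s.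
Proof. by rewrite /chart_inv /chart; have ? := pow2_gt0 (block_exp k); field; lra. Qed.

Lemma chartK k x : chart k (chart_inv k x) = x.
Proof. by rewrite /chart_inv /chart; have ? := pow2_gt0 (block_exp k); field; lra. Qed.

Lemma chart0 k : chart k 0 = knot k.
Proof. by rewrite /chart; ring. Qed.

Lemma chart1 k : chart k 1 = knot (k + 1).
Proof. by rewrite /chart knot_succ; ring. Qed.

Lemma chart_inj k s t : chart k s = chart k t -> s = t.
Proof. by move=> eq; rewrite -(chart_invK k s) eq chart_invK. Qed.

Lemma chart_lt k s t : s < t -> chart k s < chart k t.
Proof. by have := block_len_gt0 k; rewrite /chart; nra. Qed.

Lemma chart_le k s t : s <= t -> chart k s <= chart k t.
Proof. by have := block_len_gt0 k; rewrite /chart; nra. Qed.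

Lemma chart_in_block k s : 0 < s < 1 -> knot k < chart k s < knot (k + 1).
Proof. by move=> s01; rewrite -chart0 -chart1; split; apply: chart_lt; lra. Qed.

Lemma chart_in_half_block k s : 0 <= s < 1 -> knot k <= chart k s < knot (k + 1).
Proof. by move=> s01; rewrite -chart0 -chart1; split; [apply: chart_le | apply: chart_lt]; lra. Qed.

Lemma chart_in01 k s : 0 <= s <= 1 -> 0 < chart k s < 1.
Proof.
move=> s01; have := chart_le k (proj1 s01); have := chart_le k (proj2 s01).
by rewrite chart0 chart1; have := knot_in01 k; have := knot_in01 (k + 1); lra.
Qed.

Lemma chart_inv_in01 k x : knot k < x < knot (k + 1) -> 0 < chart_inv k x < 1.
Proof.
rewrite knot_succ /chart_inv => x_in; have := pow2_gt0 (block_exp k).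
by have := Rinv_l (2 ^ block_exp k) (pow_nonzero 2 _ ltac:(lra)); nra.
Qed.

Lemma chart_inv_in_half01 k x : knot k <= x < knot (k + 1) -> 0 <= chart_inv k x < 1.
Proof.
rewrite knot_succ /chart_inv => x_in; have := pow2_gt0 (block_exp k).
by have := Rinv_l (2 ^ block_exp k) (pow_nonzero 2 _ ltac:(lra)); nra.
Qed.

Lemma block_unique k k' x :
  knot k <= x < knot (k + 1) -> knot k' <= x < knot (k' + 1) -> k = k'.
Proof.
move=> x_k x_k'; case: (Z.lt_trichotomy k k') => [lt | [// | lt]].
- by have := @knot_le (k + 1) k' ltac:(lia); lra.
- by have := @knot_le (k' + 1) k ltac:(lia); lra.
Qed.

Lemma knot_opp_nat (N : nat) : knot (- Z.of_nat N) = / 2 ^ N.+1.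
Proof. by rewrite knot_nonpos; [do 3 f_equal; lia | lia]. Qed.

Lemma knot_nat (N : nat) : knot (Z.of_nat N) = 1 - / 2 ^ N.+1.
Proof. by rewrite knot_nonneg; [do 4 f_equal; lia | lia]. Qed.

Lemma block_exists x : 0 < x < 1 -> exists k, knot k <= x < knot (k + 1).
Proof.
move=> x01; have [N1 N1_lt] := pow2_inv_lt (proj1 x01).
have [N2 N2_lt] := pow2_inv_lt (e := 1 - x) ltac:(lra).
have inv_le M : (M <= N1 + N2)%N -> / 2 ^ (N1 + N2).+1 <= / 2 ^ M.
  move=> le_M; apply: Rinv_le_contravar; first exact: pow2_gt0.
  by apply: Rle_pow; [lra | lia].
have lo : knot (- Z.of_nat (N1 + N2)) <= x.
  by rewrite knot_opp_nat; have := inv_le N1 ltac:(lia); lra.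
have hi : x < knot (Z.of_nat (N1 + N2)).
  by rewrite knot_nat; have := inv_le N2 ltac:(lia); lra.
have scan (d : nat) (a : Z) :
    knot a <= x -> x < knot (a + Z.of_nat d) -> exists k, knot k <= x < knot (k + 1).
  elim: d a => [|d IH] a a_le x_lt; first by rewrite Z.add_0_r in x_lt; lra.
  case: (Rlt_le_dec x (knot (a + Z.of_nat d))) => [x_lt' | x_ge]; first exact: IH x_lt'.
  exists (a + Z.of_nat d)%Z; split => //.
  by rewrite (_ : (a + Z.of_nat d + 1)%Z = (a + Z.of_nat d.+1)%Z); last lia.
apply: (scan (N1 + N2 + (N1 + N2))%N _ lo).
by rewrite (_ : (_ + _)%Z = Z.of_nat (N1 + N2)); last lia.
Qed.

(* Junk outside (0,1), where no block contains [x]. *)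
Definition block_index (x : R) : Z :=
  epsilon (inhabits 0%Z) (fun k => knot k <= x < knot (k + 1)).

Lemma block_indexP k x : knot k <= x < knot (k + 1) -> block_index x = k.
Proof.
move=> x_k; apply: (block_unique _ x_k).
exact: (@epsilon_spec _ _ (fun j => knot j <= x < knot (j + 1)) (ex_intro _ k x_k)).
Qed.

Lemma chart_decomp x : 0 < x < 1 -> exists k s, 0 <= s < 1 /\ x = chart k s.
Proof.
move=> /block_exists[k x_k]; exists k, (chart_inv k x).
by split; [exact: chart_inv_in_half01 | rewrite chartK].
Qed.

Lemma open01_or_out x : 0 < x < 1 \/ (x <= 0 \/ 1 <= x).
Proof.
case: (Rlt_le_dec 0 x) => [x_gt0 | x_le0]; last by right; left.
by case: (Rlt_le_dec x 1) => [x_lt1 | x_ge1]; [left | right; right].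
Qed.

Definition block_shift (n : Z) (x : R) : R :=
  if Rlt_dec 0 x then
    if Rlt_dec x 1 then chart (block_index x + n) (chart_inv (block_index x) x) else x
  else x.

Lemma block_shift_out n x : x <= 0 \/ 1 <= x -> block_shift n x = x.
Proof. by move=> x_out; rewrite /block_shift; do 2?case: Rlt_dec => ? //=; lra. Qed.

Lemma block_shift_chart n k s : 0 <= s <= 1 -> block_shift n (chart k s) = chart (k + n) s.
Proof.
have shift_half j t : 0 <= t < 1 -> block_shift n (chart j t) = chart (j + n) t.
  move=> t01; have := chart_in01 j (s := t) ltac:(lra) => c01.
  rewrite /block_shift; case: Rlt_dec => [_ | ?] /=; last lra.
  case: Rlt_dec => [_ | ?] /=; last lra.
  by rewrite (block_indexP (chart_in_half_block j t01)) chart_invK.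
move=> s01; case: (Rle_lt_or_eq_dec s 1 (proj2 s01)) => [s_lt1 | ->].
  by apply: shift_half; lra.
by rewrite chart1 -chart0 shift_half ?chart0 ?chart1; [congr knot; lia | lra].
Qed.

Lemma block_shift_in01 n x : 0 < x < 1 -> 0 < block_shift n x < 1.
Proof.
by move=> /chart_decomp[k [s [s01 ->]]]; rewrite block_shift_chart; [apply: chart_in01 | ]; lra.
Qed.

Lemma block_shift_add n m x : block_shift n (block_shift m x) = block_shift (m + n) x.
Proof.
case: (open01_or_out x) => [/chart_decomp[k [s [s01 ->]]] | x_out]; last by rewrite !block_shift_out.
by rewrite !block_shift_chart ?Z.add_assoc //; lra.
Qed.

Lemma block_shift0 x : block_shift 0 x = x.
Proof.
case: (open01_or_out x) => [/chart_decomp[k [s [s01 ->]]] | x_out]; last by rewrite block_shift_out.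
by rewrite block_shift_chart ?Z.add_0_r //; lra.
Qed.

Lemma block_shift_knot n m : block_shift n (knot m) = knot (m + n).
Proof. by rewrite -!chart0 block_shift_chart //; lra. Qed.

Definition thompson_x0 (x : R) : R :=
  if Rle_dec x 0 then x else if Rle_dec x (1/2) then x / 2 else
  if Rle_dec x (3/4) then x - 1/4 else if Rle_dec x 1 then 2 * x - 1 else x.

Definition thompson_x0_inv (x : R) : R :=
  if Rle_dec x 0 then x else if Rle_dec x (1/4) then 2 * x else
  if Rle_dec x (1/2) then x + 1/4 else if Rle_dec x 1 then (x + 1) / 2 else x.

Ltac piecewise_cases := rewrite /thompson_x0 /thompson_x0_inv; do ![case: Rle_dec => ? /=]; lra.

Lemma x0_low x : 0 <= x <= 1/2 -> thompson_x0 x = x / 2.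
Proof. by move=> ?; piecewise_cases. Qed.
Lemma x0_mid x : 1/2 <= x <= 3/4 -> thompson_x0 x = x - 1/4.
Proof. by move=> ?; piecewise_cases. Qed.
Lemma x0_high x : 3/4 <= x <= 1 -> thompson_x0 x = 2 * x - 1.
Proof. by move=> ?; piecewise_cases. Qed.
Lemma x0_out x : x <= 0 \/ 1 <= x -> thompson_x0 x = x.
Proof. by move=> ?; piecewise_cases. Qed.

Lemma x0_inv_low x : 0 <= x <= 1/4 -> thompson_x0_inv x = 2 * x.
Proof. by move=> ?; piecewise_cases. Qed.
Lemma x0_inv_mid x : 1/4 <= x <= 1/2 -> thompson_x0_inv x = x + 1/4.
Proof. by move=> ?; piecewise_cases. Qed.
Lemma x0_inv_high x : 1/2 <= x <= 1 -> thompson_x0_inv x = (x + 1) / 2.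
Proof. by move=> ?; piecewise_cases. Qed.
Lemma x0_inv_out x : x <= 0 \/ 1 <= x -> thompson_x0_inv x = x.
Proof. by move=> ?; piecewise_cases. Qed.

Lemma x0K x : 0 <= x <= 1 -> thompson_x0_inv (thompson_x0 x) = x.
Proof. by move=> ?; piecewise_cases. Qed.

Lemma x0_invK x : 0 <= x <= 1 -> thompson_x0 (thompson_x0_inv x) = x.
Proof. by move=> ?; piecewise_cases. Qed.

Lemma grid2_cells (i : nat) : INR i + 1 <= 2 ^ 2 -> i = 0%N \/ i = 1%N \/ i = 2%N \/ i = 3%N.
Proof.
case: i => [|[|[|[|i]]]] i_lt; [by left | by right; left | by do 2 right; left | by do 3 right |].
by rewrite !S_INR /= in i_lt; have := pos_INR i; lra.
Qed.

Lemma dyadic_homeo_x0 : dyadic_homeo thompson_x0.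
Proof.
split.
- by move=> x ?; apply: x0_out; lra.
- by move=> x y *; piecewise_cases.
- by move=> x ?; piecewise_cases.
- move=> y y01; exists (thompson_x0_inv y); split; last exact: x0_invK.
  by piecewise_cases.
- exists 2%N => i /grid2_cells[-> | [-> | [-> | ->]]].
  + by exists 1%N, 0, 0%Z; split => //; split => [| x /= ?]; [lra | rewrite x0_low; lra].
  + by exists 1%N, 0, 0%Z; split => //; split => [| x /= ?]; [lra | rewrite x0_low; lra].
  + by exists 2%N, (-1/4), (-1)%Z; split => //; split => [| x /= ?]; [lra | rewrite x0_mid; lra].
  + by exists 3%N, (-1), (-4)%Z; split => //; split => [| x /= ?]; [lra | rewrite x0_high; lra].
Qed.

Lemma dyadic_homeo_x0_inv : dyadic_homeo thompson_x0_inv.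
Proof.
split.
- by move=> x ?; apply: x0_inv_out; lra.
- by move=> x y *; piecewise_cases.
- by move=> x ?; piecewise_cases.
- move=> y y01; exists (thompson_x0 y); split; last exact: x0K.
  by piecewise_cases.
- exists 2%N => i /grid2_cells[-> | [-> | [-> | ->]]].
  + by exists 3%N, 0, 0%Z; split => //; split => [| x /= ?]; [lra | rewrite x0_inv_low; lra].
  + by exists 2%N, (1/4), 1%Z; split => //; split => [| x /= ?]; [lra | rewrite x0_inv_mid; lra].
  + by exists 1%N, (1/2), 2%Z; split => //; split => [| x /= ?]; [lra | rewrite x0_inv_high; lra].
  + by exists 1%N, (1/2), 2%Z; split => //; split => [| x /= ?]; [lra | rewrite x0_inv_high; lra].
Qed.

Lemma knot0 : knot 0 = 1/2.
Proof. by rewrite /knot /=; field. Qed.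

Lemma knot1 : knot 1 = 3/4.
Proof. by rewrite /knot /=; field. Qed.

Lemma chart_pred_low k s : (k <= -1)%Z -> chart (k - 1) s = chart k s / 2.
Proof.
move=> k_le; rewrite /chart !knot_nonpos ?block_exp_neg; try lia.
rewrite (_ : Z.to_nat (1 - (k - 1)) = (Z.to_nat (1 - k)).+1); last lia.
by rewrite -tech_pow_Rmult; have ? := pow2_gt0 (Z.to_nat (1 - k)); field; lra.
Qed.

Lemma chart_pred_mid s : chart (-1) s = chart 0 s - 1/4.
Proof. by rewrite /chart /knot /block_exp /=; field. Qed.

Lemma chart_pred_high k s : (1 <= k)%Z -> chart (k - 1) s = 2 * chart k s - 1.
Proof.
move=> k_ge; rewrite /chart !knot_nonneg ?block_exp_nonneg; try lia.
rewrite (_ : (k - 1 + 1)%Z = k); last lia; rewrite (_ : (k - 1 + 2)%Z = (k + 1)%Z); last lia.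
rewrite (_ : Z.to_nat (k + 1) = (Z.to_nat k).+1); last lia.
rewrite (_ : Z.to_nat (k + 2) = (Z.to_nat k).+2); last lia.
by rewrite -!tech_pow_Rmult; have ? := pow2_gt0 (Z.to_nat k); field; lra.
Qed.

Lemma x0_chart k s : 0 <= s < 1 -> thompson_x0 (chart k s) = chart (k - 1) s.
Proof.
move=> s01; have [lo hi] := chart_in_half_block k s01.
have c01 := chart_in01 k (s := s) ltac:(lra).
case: (Z_lt_le_dec k 0) => [k_lt0 | k_ge0].
  have := @knot_le (k + 1) 0 ltac:(lia); rewrite knot0 => knot_le_half.
  by rewrite chart_pred_low; [rewrite x0_low //; lra | lia].
case: (Z.eq_dec k 0) => [k0 | k_neq0].
  subst k; rewrite (_ : (0 - 1)%Z = (-1)%Z) // chart_pred_mid x0_mid //.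
  by move: lo hi; rewrite knot0 (_ : (0 + 1)%Z = 1%Z) // knot1; lra.
have := @knot_le 1 k ltac:(lia); rewrite knot1 => knot_ge.
by rewrite chart_pred_high; [rewrite x0_high //; lra | lia].
Qed.

Lemma block_shiftN1 x : block_shift (-1) x = thompson_x0 x.
Proof.
case: (open01_or_out x) => [/chart_decomp[k [s [s01 ->]]] | x_out]; last first.
  by rewrite block_shift_out ?x0_out.
by rewrite block_shift_chart ?x0_chart //; lra.
Qed.

Lemma block_shift1 x : block_shift 1 x = thompson_x0_inv x.
Proof.
case: (open01_or_out x) => [x01 | x_out]; last by rewrite block_shift_out ?x0_inv_out.
rewrite -{1}(x0_invK (x := x)); last lra.
by rewrite -block_shiftN1 block_shift_add block_shift0.
Qed.

Lemma dyadic_homeo_block_shift n : dyadic_homeo (block_shift n).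
Proof.
have shift_addE m m' : block_shift (m + m') = (fun x => block_shift m' (block_shift m x)).
  by apply: functional_extensionality => x; rewrite block_shift_add.
have shift_mul (d : nat) e : dyadic_homeo (block_shift e) -> dyadic_homeo (block_shift (Z.of_nat d * e)).
  move=> e_dh; elim: d => [|d IH].
    by rewrite (functional_extensionality _ _ block_shift0); exact: dyadic_homeo_id.
  by rewrite Nat2Z.inj_succ Z.mul_succ_l shift_addE; apply: dyadic_homeo_comp.
case: (Z_le_gt_dec 0 n) => [n_ge0 | n_lt0].
  rewrite (_ : n = (Z.of_nat (Z.to_nat n) * 1)%Z); last lia.
  by apply: shift_mul; rewrite (functional_extensionality _ _ block_shift1); exact: dyadic_homeo_x0_inv.
rewrite (_ : n = (Z.of_nat (Z.to_nat (- n)) * -1)%Z); last lia.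
by apply: shift_mul; rewrite (functional_extensionality _ _ block_shiftN1); exact: dyadic_homeo_x0.
Qed.

(** * Acting inside the blocks *)

Definition stable01 (f : R -> R) : Prop := forall s, 0 < s < 1 -> 0 < f s < 1.

Definition blockwise (phi : Z -> R -> R) (x : R) : R :=
  let k := block_index x in
  if Rlt_dec (knot k) x then
    if Rlt_dec x (knot (k + 1)) then chart k (phi k (chart_inv k x)) else x
  else x.

Lemma blockwise_in phi k x :
  knot k < x < knot (k + 1) -> blockwise phi x = chart k (phi k (chart_inv k x)).
Proof.
move=> x_k; rewrite /blockwise (@block_indexP k x); last lra.
by do 2?case: Rlt_dec => ? /=; lra.
Qed.

Lemma blockwise_out phi x : (forall k, ~ (knot k < x < knot (k + 1))) -> blockwise phi x = x.
Proof.
move=> x_out; rewrite /blockwise; do 2?case: Rlt_dec => ? //=.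
by exfalso; apply: (x_out (block_index x)).
Qed.

Lemma block_cases x :
  (exists k, knot k < x < knot (k + 1)) \/ (forall k, ~ (knot k < x < knot (k + 1))).
Proof.
case: (classic (exists k, knot k < x < knot (k + 1))) => [| no_block]; first by left.
by right => k x_k; apply: no_block; exists k.
Qed.

Lemma blockwise_comp phi psi x : (forall k, stable01 (psi k)) ->
  blockwise phi (blockwise psi x) = blockwise (fun k s => phi k (psi k s)) x.
Proof.
move=> psi01; case: (block_cases x) => [[k x_k] | x_out]; last by rewrite !blockwise_out.
rewrite !(blockwise_in _ x_k) (blockwise_in _ (k := k)) ?chart_invK //.
exact/chart_in_block/psi01/chart_inv_in01.
Qed.

Lemma blockwise_ext phi psi x : (forall k s, 0 < s < 1 -> phi k s = psi k s) ->
  blockwise phi x = blockwise psi x.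
Proof.
move=> phi_psi; case: (block_cases x) => [[k x_k] | x_out]; last by rewrite !blockwise_out.
by rewrite !(blockwise_in _ x_k) phi_psi //; apply: chart_inv_in01.
Qed.

Lemma blockwise_id x : blockwise (fun _ s => s) x = x.
Proof.
case: (block_cases x) => [[k x_k] | x_out]; last by rewrite blockwise_out.
by rewrite (blockwise_in _ x_k) chartK.
Qed.

Lemma blockwise_stable01 phi : (forall k, stable01 (phi k)) -> stable01 (blockwise phi).
Proof.
move=> phi01 x x01; case: (block_cases x) => [[k x_k] | x_out]; last by rewrite blockwise_out.
rewrite (blockwise_in _ x_k); apply: chart_in01.
by have := phi01 k _ (chart_inv_in01 x_k); lra.
Qed.

Lemma knot_or_block x :
  0 < x < 1 -> (exists k, knot k < x < knot (k + 1)) \/ (exists k, x = knot k).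
Proof.
move=> /chart_decomp[k [s [s01 ->]]].
case: (Rle_lt_or_eq_dec 0 s (proj1 s01)) => [s_gt0 | <-]; last by right; exists k; rewrite chart0.
by left; exists k; apply: chart_in_block; lra.
Qed.

Lemma block_shift_blockwise n phi x : (forall k, stable01 (phi k)) ->
  block_shift n (blockwise phi x) = blockwise (fun k => phi (k - n)%Z) (block_shift n x).
Proof.
move=> phi01; case: (block_cases x) => [[k x_k] | x_out].
  have s01 := chart_inv_in01 x_k; have := phi01 k _ s01 => phi_s01.
  rewrite (blockwise_in _ x_k) block_shift_chart; last lra.
  rewrite -{2}(chartK k x) block_shift_chart; last lra.
  rewrite (blockwise_in _ (k := k + n)) ?chart_invK; last exact: chart_in_block.
  by rewrite (_ : (k + n - n)%Z = k); last lia.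
rewrite !blockwise_out //; case: (open01_or_out x) => [x01 | x_out01]; last first.
  by rewrite block_shift_out.
case: (knot_or_block x01) => [[k x_k] | [m ->]]; first by case: (x_out k).
by rewrite block_shift_knot => j; apply: knot_notin_block.
Qed.

Lemma blockwise_single k f x :
  blockwise (fun j => if j == k then f else (fun s => s)) x =
  rescale (knot k) (block_exp k) f x.
Proof.
case: (block_cases x) => [[j x_j] | x_out].
  rewrite (blockwise_in _ x_j); case: eqP => [jk | j_neq].
    by subst j; move: x_j; rewrite /rescale /chart /chart_inv knot_succ; do 2?case: Rlt_dec => ? //=; lra.
  rewrite chartK /rescale -knot_succ; do 2?case: Rlt_dec => ? //=.
  by case: j_neq; apply: (@block_unique j k x); lra.
rewrite blockwise_out // /rescale -knot_succ; do 2?case: Rlt_dec => ? //=.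
by case: (x_out k).
Qed.

Lemma dyadic_homeo_block_rescale k f :
  dyadic_homeo f -> dyadic_homeo (rescale (knot k) (block_exp k) f).
Proof.
move=> f_dh; have [z kz] := knot_dyadic k.
apply: (dyadic_homeo_rescale kz) => //; first by have := knot_in01 k; lra.
by rewrite -knot_succ; have := knot_in01 (k + 1); lra.
Qed.

Lemma dyadic_homeo_blockwise_seq (l : seq Z) phi : (forall k, dyadic_homeo (phi k)) ->
  (forall k, k \notin l -> forall s, phi k s = s) -> dyadic_homeo (blockwise phi).
Proof.
elim: l phi => [|a l IH] phi phi_dh phi_id.
  rewrite (_ : blockwise phi = fun x => x); first exact: dyadic_homeo_id.
  apply: functional_extensionality => x; rewrite -[RHS]blockwise_id.
  by apply: blockwise_ext => k s _; apply: phi_id.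
pose rest j := if j == a then (fun s : R => s) else phi j.
pose at_a j := if j == a then phi a else (fun s : R => s).
have -> : blockwise phi = (fun x => blockwise at_a (blockwise rest x)).
  apply: functional_extensionality => x.
  rewrite blockwise_comp => [|j]; last first.
    by rewrite /rest; case: eqP => ? s s01 //; apply: dyadic_homeo_open.
  by apply: blockwise_ext => j s _; rewrite /at_a /rest; case: eqP => [-> |].
apply: dyadic_homeo_comp.
  apply: IH => [j | j j_l s]; rewrite /rest; case: eqP => [_ | j_a].
  - exact: dyadic_homeo_id.
  - exact: phi_dh.
  - done.
  - by apply: phi_id; rewrite in_cons negb_or j_l andbT; apply/eqP.
rewrite (_ : blockwise at_a = rescale (knot a) (block_exp a) (phi a)).
  exact: dyadic_homeo_block_rescale.
by apply: functional_extensionality => x; apply: blockwise_single.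
Qed.

(** * Lamplighter groups inside F *)

Record lamplighter := Lamplighter { lamps : Z -> Z; cursor : Z }.

Definition ll_mul (w w' : lamplighter) : lamplighter :=
  Lamplighter (fun j => lamps w j + lamps w' (j - cursor w))%Z (cursor w + cursor w').
Definition ll_inv (w : lamplighter) : lamplighter :=
  Lamplighter (fun j => - lamps w (j + cursor w))%Z (- cursor w).
Definition ll_one : lamplighter := Lamplighter (fun _ => 0%Z) 0.

(* The wreath product Z wr Z inside Thompson's group F: the cursor moves the
   blocks, and the lamp j shifts the blocks inside the j-th block. *)
Definition ll_act (w : lamplighter) (x : R) : R :=
  blockwise (fun j => block_shift (lamps w j)) (block_shift (cursor w) x).

Lemma ll_eq (w w' : lamplighter) :
  (forall j, lamps w j = lamps w' j) -> cursor w = cursor w' -> w = w'.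
Proof.
by case: w w' => [g v] [g' v'] /= eq_g ->; congr Lamplighter; apply: functional_extensionality.
Qed.

Lemma ll_mul1g w : ll_mul ll_one w = w.
Proof. by apply: ll_eq => [j|] /=; [rewrite Z.sub_0_r | ]. Qed.

Lemma ll_mulg1 w : ll_mul w ll_one = w.
Proof. by apply: ll_eq => [j|] /=; lia. Qed.

Lemma ll_mulgA w1 w2 w3 : ll_mul w1 (ll_mul w2 w3) = ll_mul (ll_mul w1 w2) w3.
Proof.
apply: ll_eq => [j|] /=; last lia.
by rewrite (_ : (j - (cursor w1 + cursor w2))%Z = (j - cursor w1 - cursor w2)%Z); lia.
Qed.

Lemma ll_mulgV w : ll_mul w (ll_inv w) = ll_one.
Proof. by apply: ll_eq => [j|] /=; [rewrite Z.sub_add | ]; lia. Qed.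

Lemma ll_mulVg w : ll_mul (ll_inv w) w = ll_one.
Proof. by apply: ll_eq => [j|] /=; [rewrite Z.sub_opp_r | ]; lia. Qed.

Lemma ll_act_mul w w' x : ll_act (ll_mul w w') x = ll_act w (ll_act w' x).
Proof.
rewrite /ll_act block_shift_blockwise => [|k]; last exact: block_shift_in01.
rewrite blockwise_comp => [|k]; last exact: block_shift_in01.
rewrite block_shift_add Z.add_comm; apply: blockwise_ext => k s _ /=.
by rewrite block_shift_add Z.add_comm.
Qed.

Lemma ll_act_one x : ll_act ll_one x = x.
Proof.
by rewrite /ll_act block_shift0 -[RHS]blockwise_id; apply: blockwise_ext => k s _; apply: block_shift0.
Qed.

Lemma ll_act_stable01 w : stable01 (ll_act w).
Proof. by move=> x x01; apply/blockwise_stable01/block_shift_in01 => // k; exact: block_shift_in01. Qed.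

Definition zrange (K : nat) : seq Z := [seq (Z.of_nat i - Z.of_nat K)%Z | i <- iota 0 (K + K).+1].

Lemma mem_zrange K k : (Z.abs k <= Z.of_nat K)%Z -> k \in zrange K.
Proof.
move=> k_le; apply/mapP; exists (Z.to_nat (k + Z.of_nat K)); last lia.
by rewrite mem_iota; lia.
Qed.

Lemma dyadic_homeo_ll_act w (K : nat) :
  (forall j, (Z.of_nat K < Z.abs j)%Z -> lamps w j = 0%Z) -> dyadic_homeo (ll_act w).
Proof.
move=> w_lamps; apply: dyadic_homeo_comp; first exact: dyadic_homeo_block_shift.
apply: (@dyadic_homeo_blockwise_seq (zrange K)) => [k | k k_out s]; first exact: dyadic_homeo_block_shift.
rewrite w_lamps ?block_shift0 //.
by case: (Z_lt_le_dec (Z.of_nat K) (Z.abs k)) => // /mem_zrange k_in; rewrite k_in in k_out.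
Qed.

Lemma ll_act_knot0 w : ll_act w (knot 0) = knot (cursor w).
Proof. by rewrite /ll_act block_shift_knot blockwise_out // => k; apply: knot_notin_block. Qed.

Lemma ll_act_inj w w' : (forall s, 0 < s < 1 -> ll_act w s = ll_act w' s) -> w = w'.
Proof.
move=> act_eq; have cursor_eq : cursor w = cursor w'.
  by apply: knot_inj; rewrite -!ll_act_knot0; apply: act_eq; exact: knot_in01.
apply: ll_eq => // j; pose y := chart j (knot 0).
have y_j : knot j < y < knot (j + 1) by apply/chart_in_block/knot_in01.
have y01 : 0 < y < 1 by apply: chart_in01; have := knot_in01 0; lra.
have := act_eq (block_shift (- cursor w) y) (block_shift_in01 _ y01).
rewrite /ll_act -cursor_eq !block_shift_add Z.add_opp_diag_l !block_shift0 !(blockwise_in _ y_j) chart_invK.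
by move/chart_inj; rewrite !block_shift_knot => /knot_inj; lia.
Qed.

Section FiniteFamilies.
Variable T : finType.

Definition block_of (t : T) : Z := Z.of_nat (enum_rank t).

Definition fam_at (E : T -> lamplighter) (k : Z) : lamplighter :=
  if [pick t | block_of t == k] is Some t then E t else ll_one.

Definition fam_act (E : T -> lamplighter) : R -> R := blockwise (fun k => ll_act (fam_at E k)).

Definition fam_mul (E E' : T -> lamplighter) : T -> lamplighter := fun t => ll_mul (E t) (E' t).
Definition fam_inv (E : T -> lamplighter) : T -> lamplighter := fun t => ll_inv (E t).
Definition fam_one : T -> lamplighter := fun _ => ll_one.

Lemma block_of_inj : injective block_of.
Proof. by move=> t t' /Nat2Z.inj eq_rank; apply/enum_rank_inj/val_inj. Qed.

Lemma fam_at_block E t : fam_at E (block_of t) = E t.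
Proof.
by rewrite /fam_at; case: pickP => [t' /eqP/block_of_inj -> // | /(_ t)]; rewrite eqxx.
Qed.

Lemma fam_at_mul E E' k : fam_at (fam_mul E E') k = ll_mul (fam_at E k) (fam_at E' k).
Proof. by rewrite /fam_at; case: pickP => // _; rewrite ll_mul1g. Qed.

Lemma fam_at_one k : fam_at fam_one k = ll_one.
Proof. by rewrite /fam_at; case: pickP. Qed.

Lemma fam_act_mul E E' : fam_act (fam_mul E E') = compf (fam_act E) (fam_act E').
Proof.
apply: functional_extensionality => x; rewrite /compf /fam_act blockwise_comp => [|k].
  by apply: blockwise_ext => k s _; rewrite fam_at_mul ll_act_mul.
exact: ll_act_stable01.
Qed.

Lemma fam_act_one : fam_act fam_one = idf.
Proof.
apply: functional_extensionality => x; rewrite /fam_act -[RHS]blockwise_id.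
by apply: blockwise_ext => k s _; rewrite fam_at_one ll_act_one.
Qed.

Lemma fam_act_inj E E' : fam_act E = fam_act E' -> E = E'.
Proof.
move=> act_eq; apply: functional_extensionality => t; rewrite -!(fam_at_block _ t).
apply: ll_act_inj => s s01; apply: (@chart_inj (block_of t)).
have act_chart F : fam_act F (chart (block_of t) s) = chart (block_of t) (ll_act (fam_at F (block_of t)) s).
  by rewrite /fam_act (blockwise_in _ (chart_in_block _ s01)) chart_invK.
by rewrite -!act_chart act_eq.
Qed.

Definition fam_bounded (E : T -> lamplighter) : Prop :=
  exists K : nat, forall t, (Z.abs (cursor (E t)) <= Z.of_nat K)%Z /\
    forall j, (Z.of_nat K < Z.abs j)%Z -> lamps (E t) j = 0%Z.

Lemma fam_bounded_one : fam_bounded fam_one.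
Proof. by exists 0%N => t /=; split. Qed.

Lemma fam_bounded_mul E E' : fam_bounded E -> fam_bounded E' -> fam_bounded (fam_mul E E').
Proof.
move=> [K E_K] [K' E'_K']; exists (K + K')%N => t.
have [cur lam] := E_K t; have [cur' lam'] := E'_K' t.
split => [| j j_gt] /=; first lia.
by rewrite lam ?lam'; lia.
Qed.

Lemma fam_bounded_inv E : fam_bounded E -> fam_bounded (fam_inv E).
Proof.
move=> [K E_K]; exists (K + K)%N => t; have [cur lam] := E_K t.
by split => [| j j_gt] /=; [lia | rewrite lam; lia].
Qed.

Lemma dyadic_homeo_fam_act E : fam_bounded E -> dyadic_homeo (fam_act E).
Proof.
move=> [K E_K]; apply: (@dyadic_homeo_blockwise_seq [seq block_of t | t <- enum T]).
  move=> k; apply: (@dyadic_homeo_ll_act _ K) => j j_gt.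
  by rewrite /fam_at; case: pickP => [t _ | _]; [case: (E_K t) => _; apply | ].
move=> k k_out s; rewrite /fam_at; case: pickP => [t /eqP t_k | _]; last exact: ll_act_one.
by move: k_out; rewrite -t_k map_f ?mem_enum.
Qed.

Lemma fam_act_nested E t j s : 0 < s < 1 -> cursor (E t) = 0%Z ->
  fam_act E (chart (block_of t) (chart j s)) =
  chart (block_of t) (chart j (block_shift (lamps (E t) j) s)).
Proof.
move=> s01 cursor0; have cj01 : 0 < chart j s < 1 by apply: chart_in01; lra.
rewrite /fam_act (blockwise_in _ (chart_in_block _ cj01)) chart_invK fam_at_block.
by rewrite /ll_act cursor0 block_shift0 (blockwise_in _ (chart_in_block _ s01)) chart_invK.
Qed.

Lemma fam_mul1g E : fam_mul fam_one E = E.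
Proof. by apply: functional_extensionality => t; apply: ll_mul1g. Qed.

Lemma fam_mulg1 E : fam_mul E fam_one = E.
Proof. by apply: functional_extensionality => t; apply: ll_mulg1. Qed.

Lemma fam_mulgA E1 E2 E3 : fam_mul E1 (fam_mul E2 E3) = fam_mul (fam_mul E1 E2) E3.
Proof. by apply: functional_extensionality => t; apply: ll_mulgA. Qed.

Lemma fam_mulgV E : fam_mul E (fam_inv E) = fam_one.
Proof. by apply: functional_extensionality => t; apply: ll_mulgV. Qed.

Lemma fam_mulVg E : fam_mul (fam_inv E) E = fam_one.
Proof. by apply: functional_extensionality => t; apply: ll_mulVg. Qed.

Lemma fam_inv_unique E E' : fam_mul E E' = fam_one -> fam_inv E = E'.
Proof. by move=> EE'; rewrite -[LHS]fam_mulg1 -EE' fam_mulgA fam_mulVg fam_mul1g. Qed.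

Lemma fam_invM E E' : fam_inv (fam_mul E E') = fam_mul (fam_inv E') (fam_inv E).
Proof.
apply: fam_inv_unique.
by rewrite fam_mulgA -(fam_mulgA E) fam_mulgV fam_mulg1 fam_mulgV.
Qed.

Lemma fam_invK E : fam_inv (fam_inv E) = E.
Proof. exact/fam_inv_unique/fam_mulVg. Qed.

Lemma fam_inv1 : fam_inv fam_one = fam_one.
Proof. exact/fam_inv_unique/fam_mul1g. Qed.

Inductive fam_gen (L : list (T -> lamplighter)) : (T -> lamplighter) -> Prop :=
| fam_gen_one : fam_gen L fam_one
| fam_gen_elt E : List.In E L -> fam_gen L E
| fam_gen_inv_elt E : List.In E L -> fam_gen L (fam_inv E)
| fam_gen_mul E E' : fam_gen L E -> fam_gen L E' -> fam_gen L (fam_mul E E').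

Lemma fam_gen_inv L E : fam_gen L E -> fam_gen L (fam_inv E).
Proof.
elim=> [|E' E'_L|E' E'_L|E1 E2 _ gen1 _ gen2].
- by rewrite fam_inv1; apply: fam_gen_one.
- exact: fam_gen_inv_elt.
- by rewrite fam_invK; apply: fam_gen_elt.
- by rewrite fam_invM; apply: fam_gen_mul.
Qed.

Lemma gen_by_fam_act L E :
  fam_gen L E -> gen_by (fun g => List.In g (List.map fam_act L)) (fam_act E).
Proof.
elim=> [|E' E'_L|E' E'_L|E1 E2 _ gen1 _ gen2].
- by rewrite fam_act_one; apply: gen_id.
- exact/gen_elt/List.in_map.
- apply: (@gen_inv _ _ (fam_act E')); first exact: List.in_map.
    by rewrite -fam_act_mul fam_mulgV fam_act_one.
  by rewrite -fam_act_mul fam_mulVg fam_act_one.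
- by rewrite fam_act_mul; apply: gen_comp.
Qed.

Lemma fam_gen_zpow L (P : Z -> T -> lamplighter) :
  (forall a b, P (a + b)%Z = fam_mul (P a) (P b)) -> P 0%Z = fam_one ->
  fam_gen L (P 1%Z) -> forall z, fam_gen L (P z).
Proof.
move=> P_add P0 gen1.
have gen_nat (d : nat) : fam_gen L (P (Z.of_nat d)).
  elim: d => [|d IH]; first by rewrite P0; apply: fam_gen_one.
  by rewrite Nat2Z.inj_succ -Z.add_1_l P_add; apply: fam_gen_mul.
move=> z; case: (Z_le_gt_dec 0 z) => [z_ge0 | z_lt0].
  by rewrite -(Z2Nat.id z z_ge0).
have -> : P z = fam_inv (P (Z.of_nat (Z.to_nat (- z)))).
  symmetry; apply: fam_inv_unique; rewrite -P_add -P0; congr P; lia.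
exact: fam_gen_inv.
Qed.

Lemma fam_gen_prod L (X : Type) (r : seq X) (P : X -> T -> lamplighter) :
  (forall x, fam_gen L (P x)) -> fam_gen L (foldr (fun x E => fam_mul (P x) E) fam_one r).
Proof. by move=> gen_P; elim: r => [|x r IH] /=; [apply: fam_gen_one | apply: fam_gen_mul]. Qed.

End FiniteFamilies.

Arguments fam_one {T}.
Arguments fam_act {T}.

Section PureFamilies.
Variables (T : finType) (L : list (T -> lamplighter)).

Definition lamp_fam (g : T -> Z -> Z) : T -> lamplighter := fun t => Lamplighter (g t) 0.
Definition cursor_fam (v : T -> Z) : T -> lamplighter := fun t => Lamplighter (fun _ => 0%Z) (v t).

Definition lamp_at (t0 : T) (j0 : Z) : T -> lamplighter :=
  lamp_fam (fun t j => Z.b2z ((t == t0) && (j == j0))).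

Lemma fam_split (E : T -> lamplighter) :
  E = fam_mul (lamp_fam (fun t => lamps (E t))) (cursor_fam (fun t => cursor (E t))).
Proof. by apply: functional_extensionality => t; apply: ll_eq => [j|] /=; lia. Qed.

Lemma lamp_fam_mul g h :
  fam_mul (lamp_fam g) (lamp_fam h) = lamp_fam (fun t j => g t j + h t j)%Z.
Proof. by apply: functional_extensionality => t; apply: ll_eq => [j|] /=; rewrite ?Z.sub_0_r. Qed.

Lemma cursor_fam_mul v w :
  fam_mul (cursor_fam v) (cursor_fam w) = cursor_fam (fun t => v t + w t)%Z.
Proof. by apply: functional_extensionality => t; apply: ll_eq. Qed.

Lemma fam_gen_lamp_scale g z :
  fam_gen L (lamp_fam g) -> fam_gen L (lamp_fam (fun t j => z * g t j)%Z).
Proof.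
move=> gen_g; apply: (@fam_gen_zpow _ L (fun z => lamp_fam (fun t j => z * g t j)%Z)).
- move=> a b; rewrite lamp_fam_mul; congr lamp_fam.
  by do 2 apply: functional_extensionality => ?; lia.
- by apply: functional_extensionality.
- by rewrite (_ : (fun t j => 1 * g t j)%Z = g) //; do 2 apply: functional_extensionality => ?; lia.
Qed.

Lemma fam_gen_cursor_scale v z :
  fam_gen L (cursor_fam v) -> fam_gen L (cursor_fam (fun t => z * v t)%Z).
Proof.
move=> gen_v; apply: (@fam_gen_zpow _ L (fun z => cursor_fam (fun t => z * v t)%Z)).
- move=> a b; rewrite cursor_fam_mul; congr cursor_fam.
  by apply: functional_extensionality => ?; lia.
- by apply: functional_extensionality.
- by rewrite (_ : (fun t => 1 * v t)%Z = v) //; apply: functional_extensionality => ?; lia.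
Qed.

Lemma fam_gen_lamp_sum (X : finType) (G : X -> T -> Z -> Z) :
  (forall x, fam_gen L (lamp_fam (G x))) ->
  fam_gen L (lamp_fam (fun t j => \big[Z.add/0%Z]_x G x t j)).
Proof.
move=> gen_G; rewrite (_ : lamp_fam _ = foldr (fun x E => fam_mul (lamp_fam (G x)) E)
                                          fam_one (index_enum X)); first exact: fam_gen_prod.
elim: (index_enum X) => [|x r IH] /=.
  by apply: functional_extensionality => t; apply: ll_eq => [j|] //=; rewrite big_nil.
rewrite -IH lamp_fam_mul; congr lamp_fam.
by do 2 apply: functional_extensionality => ?; rewrite big_cons.
Qed.

Lemma fam_gen_cursor_sum (X : finType) (V : X -> T -> Z) :
  (forall x, fam_gen L (cursor_fam (V x))) ->
  fam_gen L (cursor_fam (fun t => \big[Z.add/0%Z]_x V x t)).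
Proof.
move=> gen_V; rewrite (_ : cursor_fam _ = foldr (fun x E => fam_mul (cursor_fam (V x)) E)
                                            fam_one (index_enum X)); first exact: fam_gen_prod.
elim: (index_enum X) => [|x r IH] /=.
  by apply: functional_extensionality => t; apply: ll_eq => [j|] //=; rewrite big_nil.
rewrite -IH cursor_fam_mul; congr cursor_fam.
by apply: functional_extensionality => ?; rewrite big_cons.
Qed.

End PureFamilies.

(** * Realising a configuration *)

Lemma gen_by_fixed (X : Type) (S : (X -> X) -> Prop) (x : X) f :
  (forall g, S g -> g x = x) -> gen_by S f -> f x = x.
Proof.
move=> S_fix; elim=> [|s s_S|s t s_S st ts|f1 f2 _ f1x _ f2x] //; first exact: S_fix.
  by have := f_equal (fun h => h x) ts; rewrite /compf /idf S_fix.
by rewrite /compf f2x.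
Qed.

Lemma inP (T : eqType) (x : T) (s : seq T) : reflect (List.In x s) (x \in s).
Proof.
elim: s => [|y s IH] /=; first by constructor.
rewrite in_cons; apply: (iffP orP) => [[/eqP -> | /IH] | [<- | /IH]]; by [left | right].
Qed.

Lemma sumZ_single (X : finType) (x0 : X) (F : X -> Z) :
  (forall x, x != x0 -> F x = 0%Z) -> \big[Z.add/0%Z]_x F x = F x0.
Proof. by move=> F0; rewrite (bigD1 x0) //= big1 ?Z.add_0_r. Qed.

Section Configuration.
Variables (n : nat) (c : {set 'I_n} -> bool).

(* An element of the J-th factor (Z wr Z) x Z^J sits in the slots (J, None)
   (its lamplighter coordinate w) and (J, Some l) (its coordinate t_l). *)
Local Notation slot := ({set 'I_n} * option 'I_n)%type.

Record admissible (i : 'I_n) (E : slot -> lamplighter) : Prop := Admissible {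
  adm_bounded : fam_bounded E;
  adm_inactive : forall (J : {set 'I_n}) r, ~~ (c J && (i \in J)) -> E (J, r) = ll_one;
  adm_cursor : forall J : {set 'I_n},
    cursor (E (J, None)) = \big[Z.add/0%Z]_(l in J) cursor (E (J, Some l));
  adm_no_lamps : forall (J : {set 'I_n}) (l : 'I_n) j, lamps (E (J, Some l)) j = 0%Z;
  adm_outside : forall (J : {set 'I_n}) (l : 'I_n), l \notin J -> E (J, Some l) = ll_one;
  adm_own : forall J : {set 'I_n}, cursor (E (J, Some i)) = 0%Z }.

Lemma admissible_one i : admissible i fam_one.
Proof. by split => //; [exact: fam_bounded_one | move=> J; rewrite big1]. Qed.

Lemma admissible_mul i E E' : admissible i E -> admissible i E' -> admissible i (fam_mul E E').
Proof.
case=> bE inE curE lamE outE ownE [bE' inE' curE' lamE' outE' ownE']; split.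
- exact: fam_bounded_mul.
- by move=> J r J_off; rewrite /fam_mul inE // inE' // ll_mul1g.
- by move=> J; rewrite /fam_mul /= curE curE' big_split.
- by move=> J l j /=; rewrite lamE lamE'.
- by move=> J l l_out; rewrite /fam_mul outE // outE' // ll_mul1g.
- by move=> J /=; rewrite ownE ownE'.
Qed.

Lemma admissible_inv i E : admissible i E -> admissible i (fam_inv E).
Proof.
case=> bE inE curE lamE outE ownE; split.
- exact: fam_bounded_inv.
- by move=> J r J_off; rewrite /fam_inv inE //; apply: ll_eq.
- move=> J; rewrite /fam_inv /= curE.
  by apply: (big_ind2 (fun a b => (- a)%Z = b)) => // a b a' b' <- <-; lia.
- by move=> J l j /=; rewrite lamE.
- by move=> J l l_out; rewrite /fam_inv outE //; apply: ll_eq.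
- by move=> J /=; rewrite ownE.
Qed.

Definition config_subgroup (i : 'I_n) : (R -> R) -> Prop :=
  fun f => exists E, admissible i E /\ f = fam_act E.

Lemma config_subgroupP (G : (R -> R) -> Prop) i :
  (forall f, dyadic_homeo f -> G f) -> is_subgroup G (config_subgroup i).
Proof.
move=> G_dh; split; [|split; [|split]].
- by move=> f [E [E_adm ->]]; apply/G_dh/dyadic_homeo_fam_act/(adm_bounded E_adm).
- by exists fam_one; rewrite fam_act_one; split => //; exact: admissible_one.
- move=> f g [E [E_adm ->]] [E' [E'_adm ->]].
  by exists (fam_mul E E'); rewrite fam_act_mul; split => //; exact: admissible_mul.
- move=> f [E [E_adm ->]]; exists (fam_act (fam_inv E)); split.
    by exists (fam_inv E); split => //; exact: admissible_inv.
  by rewrite -!fam_act_mul fam_mulgV fam_mulVg fam_act_one.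
Qed.

Lemma bigcap_configP (I : {set 'I_n}) f : I != set0 ->
  bigcapH config_subgroup I f <-> exists E, (forall i, i \in I -> admissible i E) /\ f = fam_act E.
Proof.
move=> /set0Pn[i0 i0_I]; split; last by move=> [E [E_adm ->]] i i_I; exists E; split; auto.
move=> f_cap; have [E0 [_ f_E0]] := f_cap i0 i0_I; exists E0; split => // i i_I.
by have [E [E_adm f_E]] := f_cap i i_I; rewrite -(@fam_act_inj _ E E0) // -f_E.
Qed.

Lemma admissible_cursor_none (I : {set 'I_n}) E : I != set0 ->
  (forall i, i \in I -> admissible i E) -> cursor (E (I, None)) = 0%Z.
Proof.
move=> /set0Pn[i0 i0_I] E_adm; rewrite (adm_cursor (E_adm i0 i0_I)); apply: big1 => l l_I.
exact: adm_own (E_adm l l_I) I.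
Qed.

Lemma admissible_lamp_at i (J : {set 'I_n}) j0 :
  c J -> i \in J -> admissible i (lamp_at (J, None) j0).
Proof.
move=> cJ i_J; have off r J' : (J', r) != (J, None) -> lamp_at (J, None) j0 (J', r) = ll_one.
  by move=> /negbTE neq; apply: ll_eq => [j|] //=; rewrite neq.
split.
- exists (Z.to_nat (Z.abs j0)) => t; split => [| j j_gt] /=; first lia.
  by rewrite andbC; case: eqP => [jj0 | _] //=; subst j; lia.
- move=> J' r J'_off; rewrite off //; move: J'_off; apply: contra => /eqP[-> _].
  by rewrite cJ i_J.
- by move=> J' /=; rewrite big1.
- by move=> J' l j /=; rewrite xpair_eqE andbF.
- by move=> J' l _; rewrite off // xpair_eqE andbF.
- by move=> J'.
Qed.

Lemma bigcap_lamps_bound (I : {set 'I_n}) (gs : list (R -> R)) : I != set0 ->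
  (forall g, List.In g gs -> bigcapH config_subgroup I g) ->
  exists K : nat, forall g, List.In g gs -> exists E,
    (forall i, i \in I -> admissible i E) /\ g = fam_act E /\
    forall t j, (Z.of_nat K < Z.abs j)%Z -> lamps (E t) j = 0%Z.
Proof.
move=> I_ne; elim: gs => [|g gs IH] gs_cap; first by exists 0%N.
have [K K_gs] := IH (fun g' g'_gs => gs_cap g' (or_intror g'_gs)).
have [E [E_adm g_E]] := (bigcap_configP _ I_ne).1 (gs_cap g (or_introl erefl)).
have [i0 i0_I] := set0Pn I I_ne; have [KE E_K] := adm_bounded (E_adm i0 i0_I).
exists (K + KE)%N => g' [<- | g'_gs].
  by exists E; do 2 split => //; move=> t j j_gt; apply: (E_K t).2; lia.
have [E' [E'_adm [g'_E' E'_K]]] := K_gs g' g'_gs.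
by exists E'; do 2 split => //; move=> t j j_gt; apply: E'_K; lia.
Qed.

(* Every element of a finitely generated subgroup of the intersection has its lamps
   in slot (I, None) below a common bound, so all of them fix the point
   [chart k0 (chart j0 (knot 0))] beyond it, which [lamp_at (I, None) j0] moves. *)
Lemma bigcap_not_fin_gen (I : {set 'I_n}) :
  I != set0 -> c I -> ~ fin_gen (bigcapH config_subgroup I).
Proof.
move=> I_ne cI [gs [gs_cap gs_gen]].
have [K K_gs] := bigcap_lamps_bound I_ne gs_cap.
pose s0 : slot := (I, None); pose k0 := block_of s0; pose j0 := (Z.of_nat K + 1)%Z.
have knot0_01 := knot_in01 0.
have gs_fix g : List.In g gs -> g (chart k0 (chart j0 (knot 0))) = chart k0 (chart j0 (knot 0)).
  move=> g_gs; have [E [E_adm [-> E_K]]] := K_gs g g_gs.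
  rewrite fam_act_nested ?E_K ?block_shift0 //; last exact: admissible_cursor_none.
  by rewrite /j0; lia.
have lamp_cap : bigcapH config_subgroup I (fam_act (lamp_at s0 j0)).
  apply/(bigcap_configP _ I_ne); exists (lamp_at s0 j0); split => // i i_I.
  exact: admissible_lamp_at.
have := gen_by_fixed gs_fix (gs_gen _ lamp_cap).
rewrite fam_act_nested //= !eqxx /= block_shift_knot => /chart_inj/chart_inj/knot_inj.
lia.
Qed.

Definition cursor_pair (J : {set 'I_n}) (l : 'I_n) : slot -> lamplighter :=
  cursor_fam (fun t => Z.b2z (t == (J, None)) + Z.b2z (t == (J, Some l)))%Z.

Lemma admissible_cursor_pair i (J : {set 'I_n}) l :
  c J -> i \in J -> l \in J -> l != i -> admissible i (cursor_pair J l).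
Proof.
move=> cJ i_J l_J l_i; split.
- by exists 2%N => t; split => //= ; case: (t == _); case: (t == _).
- move=> J' r J'_off; case: (eqVneq J' J) => [JJ' | J'J].
    by subst J'; rewrite cJ i_J in J'_off.
  by apply: ll_eq => [j|] //=; rewrite !xpair_eqE (negbTE J'J).
- move=> J' /=; rewrite !xpair_eqE !andbT andbF /=.
  under eq_bigr => l' _ do rewrite !xpair_eqE andbF.
  case: (eqVneq J' J) => [-> | J'J] /=; last by rewrite big1.
  rewrite (bigD1 l) //= eqxx big1 // => l' /andP[_ l'_l] /=.
  by rewrite (inj_eq (@Some_inj _)) (negbTE l'_l).
- by [].
- move=> J' l' l'_out; apply: ll_eq => [j|] //=.
  case: (eqVneq J' J) => [JJ' | J'J]; last by rewrite !xpair_eqE (negbTE J'J).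
  subst J'; have l'_l : l' != l by apply: contraNneq l'_out => ->.
  by rewrite !xpair_eqE andbF (inj_eq (@Some_inj _)) (negbTE l'_l) andbF.
- move=> J' /=; case: (eqVneq J' J) => [-> | J'J]; last by rewrite !xpair_eqE (negbTE J'J).
  by rewrite !xpair_eqE andbF (inj_eq (@Some_inj _)) eq_sym (negbTE l_i) andbF.
Qed.

Section FinitelyGenerated.
Variable I : {set 'I_n}.
Hypotheses (I_ne : I != set0) (cI : c I = false).

Definition above (J : {set 'I_n}) : bool := c J && (I \subset J).

Definition generators : list (slot -> lamplighter) :=
  List.flat_map (fun J => lamp_at (J, None) 0 :: List.map (cursor_pair J) (enum (J :\: I)))
    (enum [set J | above J]).

Lemma generators_admissible E i : List.In E generators -> i \in I -> admissible i E.
Proof.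
move=> /List.in_flat_map[J [/inP J_above E_J]] i_I.
move: J_above; rewrite mem_enum inE => /andP[cJ /subsetP I_J].
case: E_J => [<- | /List.in_map_iff[l [<- /inP]]]; first exact/admissible_lamp_at/I_J.
rewrite mem_enum inE => /andP[l_I l_J]; apply: admissible_cursor_pair => //; first exact: I_J.
by apply: contraNneq l_I => ->.
Qed.

Lemma above_witness J : above J -> exists l, l \in J :\: I.
Proof.
move=> /andP[cJ I_J]; apply/set0Pn; rewrite setD_eq0; apply/negP => J_I.
have /eqP J_eq_I : J == I by rewrite eqEsubset J_I I_J.
by rewrite J_eq_I cI in cJ.
Qed.

Lemma gen_cursor_pair J l : above J -> l \in J :\: I -> fam_gen generators (cursor_pair J l).
Proof.
move=> J_above l_JI; apply: fam_gen_elt; apply/List.in_flat_map; exists J; split.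
  by apply/inP; rewrite mem_enum inE.
by right; apply: List.in_map; apply/inP; rewrite mem_enum.
Qed.

(* Conjugating the lamp at 0 by the m-th power of a cursor pair moves it to m. *)
Lemma gen_lamp_at J m : above J -> fam_gen generators (lamp_at (J, None) m).
Proof.
move=> J_above; have [l l_JI] := above_witness J_above.
pose ind t := (Z.b2z (t == (J, None)) + Z.b2z (t == (J, Some l)))%Z.
have -> : lamp_at (J, None) m = fam_mul (fam_mul (cursor_fam (fun t => m * ind t)%Z)
                                          (lamp_at (J, None) 0)) (cursor_fam (fun t => - m * ind t)%Z).
  apply: functional_extensionality => t; apply: ll_eq => [j|] /=; last lia.
  case: (eqVneq t (J, None)) => [-> | _] //=.
  rewrite /ind eqxx xpair_eqE andbF /= Z.mul_1_r Z.add_0_r.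
  by case: (j =P m) => [-> | j_m]; case: eqP => //; lia.
apply: fam_gen_mul; first apply: fam_gen_mul.
- exact/fam_gen_cursor_scale/gen_cursor_pair.
- apply: fam_gen_elt; apply/List.in_flat_map; exists J; split; last by left.
  by apply/inP; rewrite mem_enum inE.
- exact/fam_gen_cursor_scale/gen_cursor_pair.
Qed.

Section Decomposition.
Variable E : slot -> lamplighter.
Hypothesis E_adm : forall i, i \in I -> admissible i E.

Lemma below_inactive J r : ~~ above J -> E (J, r) = ll_one.
Proof.
have [i0 i0_I] := set0Pn I I_ne; rewrite negb_and => /orP[not_cJ | /subsetPn[i i_I i_J]].
  by apply: (adm_inactive (E_adm i0_I)); rewrite (negbTE not_cJ).
by apply: (adm_inactive (E_adm i_I)); rewrite (negbTE i_J) andbF.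
Qed.

Definition cursor_coef (J : {set 'I_n}) (l : 'I_n) : Z :=
  if above J && (l \in J :\: I) then cursor (E (J, Some l)) else 0%Z.

Lemma cursor_decomp t : cursor (E t) = \big[Z.add/0%Z]_(J : {set 'I_n}) \big[Z.add/0%Z]_(l : 'I_n)
  (cursor_coef J l * (Z.b2z (t == (J, None)) + Z.b2z (t == (J, Some l))))%Z.
Proof.
have [i0 i0_I] := set0Pn I I_ne.
case: t => J0 r; rewrite (@sumZ_single _ J0) => [|J J_J0]; last first.
  by apply: big1 => l _; rewrite !xpair_eqE eq_sym (negbTE J_J0) /=; lia.
case: r => [l0 |].
  rewrite (@sumZ_single _ l0) => [|l l_l0] /=.
    rewrite !xpair_eqE eqxx andbF /= eqxx /= Z.mul_1_r /cursor_coef.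
    case J0_above: (above J0); last by rewrite below_inactive ?J0_above.
    rewrite inE /=; case: (boolP (l0 \in J0)) => l0_J0; last first.
      by rewrite andbF (adm_outside (E_adm i0_I)).
    by case: (boolP (l0 \in I)) => l0_I //=; apply: (adm_own (E_adm l0_I)).
  by rewrite !xpair_eqE eqxx andbF (inj_eq (@Some_inj _)) eq_sym (negbTE l_l0) /=; lia.
rewrite (eq_bigr (fun l => cursor_coef J0 l)) => [|l _]; last first.
  by rewrite !xpair_eqE !eqxx /= Z.mul_1_r.
case J0_above: (above J0); last first.
  by rewrite below_inactive ?J0_above // big1 // => l _; rewrite /cursor_coef J0_above.
rewrite (adm_cursor (E_adm i0_I)) big_mkcond; apply: eq_bigr => l _.
rewrite /cursor_coef J0_above inE /=; case: (boolP (l \in J0)) => l_J0; rewrite ?andbT ?andbF //.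
by case: (boolP (l \in I)) => l_I //=; apply: (adm_own (E_adm l_I)).
Qed.

Definition lamp_coef (K : nat) (J : {set 'I_n}) (m : 'I_(K + K).+1) : Z :=
  if above J then lamps (E (J, None)) (Z.of_nat m - Z.of_nat K) else 0%Z.

Lemma lamps_decomp (K : nat) t j :
  (forall t j, (Z.of_nat K < Z.abs j)%Z -> lamps (E t) j = 0%Z) ->
  lamps (E t) j = \big[Z.add/0%Z]_(J : {set 'I_n}) \big[Z.add/0%Z]_(m : 'I_(K + K).+1)
    (lamp_coef J m * Z.b2z ((t == (J, None)) && (j == Z.of_nat m - Z.of_nat K)%Z))%Z.
Proof.
move=> E_K; have [i0 i0_I] := set0Pn I I_ne.
case: t => J0 [l0 |].
  rewrite (adm_no_lamps (E_adm i0_I)); symmetry.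
  by apply: big1 => J _; apply: big1 => m _; rewrite xpair_eqE andbF /=; lia.
rewrite (@sumZ_single _ J0) => [|J J_J0]; last first.
  by apply: big1 => m _; rewrite xpair_eqE eq_sym (negbTE J_J0) /=; lia.
case J0_above: (above J0); last first.
  by rewrite below_inactive ?J0_above // big1 // => m _; rewrite /lamp_coef J0_above.
case: (Z_le_gt_dec (Z.abs j) (Z.of_nat K)) => [j_le | j_gt]; last first.
  have -> : lamps (E (J0, None)) j = 0%Z by apply: E_K; lia.
  symmetry; apply: big1 => m _; rewrite eqxx /=.
  have /negbTE -> : j != (Z.of_nat m - Z.of_nat K)%Z by apply/eqP; have := ltn_ord m; lia.
  by rewrite /= Z.mul_0_r.
have m0_lt : (Z.to_nat (j + Z.of_nat K) < (K + K).+1)%N by lia.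
rewrite (@sumZ_single _ (Ordinal m0_lt)) => [|m m_m0] /=.
  have m0_j : (Z.of_nat (Z.to_nat (j + Z.of_nat K)) - Z.of_nat K)%Z = j by lia.
  by rewrite eqxx /= /lamp_coef J0_above m0_j eqxx Z.mul_1_r.
rewrite eqxx /=; case: eqP => [j_m | _]; last lia.
by case/eqP: m_m0; apply: val_inj => /=; lia.
Qed.

End Decomposition.

Lemma gen_lamp_part E : (forall i, i \in I -> admissible i E) ->
  fam_gen generators (lamp_fam (fun t => lamps (E t))).
Proof.
move=> E_adm; have [i0 i0_I] := set0Pn I I_ne; have [K E_K] := adm_bounded (E_adm i0 i0_I).
rewrite (_ : (fun t => lamps (E t)) = fun t j => \big[Z.add/0%Z]_(J : {set 'I_n})
   \big[Z.add/0%Z]_(m : 'I_(K + K).+1) (lamp_coef E J m *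
     Z.b2z ((t == (J, None)) && (j == Z.of_nat m - Z.of_nat K)%Z))%Z); last first.
  do 2 apply: functional_extensionality => ?; apply: lamps_decomp => // t j.
  exact: (E_K t).2.
apply: fam_gen_lamp_sum => J; apply: fam_gen_lamp_sum => m.
case: (boolP (above J)) => J_above; first exact/fam_gen_lamp_scale/gen_lamp_at.
rewrite (_ : lamp_fam _ = fam_one); first exact: fam_gen_one.
apply: functional_extensionality => t; apply: ll_eq => [j|] //=.
by rewrite /lamp_coef (negbTE J_above).
Qed.

Lemma gen_cursor_part E : (forall i, i \in I -> admissible i E) ->
  fam_gen generators (cursor_fam (fun t => cursor (E t))).
Proof.
move=> E_adm; rewrite (_ : (fun t => cursor (E t)) = fun t => \big[Z.add/0%Z]_(J : {set 'I_n})
   \big[Z.add/0%Z]_(l : 'I_n) (cursor_coef E J l *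
     (Z.b2z (t == (J, None)) + Z.b2z (t == (J, Some l))))%Z); last first.
  by apply: functional_extensionality => t; apply: cursor_decomp.
apply: fam_gen_cursor_sum => J; apply: fam_gen_cursor_sum => l.
case: (boolP (above J && (l \in J :\: I))) => [/andP[J_above l_JI] | J_l_off].
  exact/fam_gen_cursor_scale/gen_cursor_pair.
rewrite (_ : cursor_fam _ = fam_one); first exact: fam_gen_one.
apply: functional_extensionality => t; apply: ll_eq => [j|] //=.
by rewrite /cursor_coef (negbTE J_l_off).
Qed.

Lemma gen_bigcap E : (forall i, i \in I -> admissible i E) -> fam_gen generators E.
Proof.
move=> E_adm; rewrite (fam_split E).
by apply: fam_gen_mul; [apply: gen_lamp_part | apply: gen_cursor_part].
Qed.

Lemma bigcap_fin_gen : fin_gen (bigcapH config_subgroup I).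
Proof.
exists (List.map fam_act generators); split.
  move=> g /List.in_map_iff[E [<- E_gen]]; apply/(bigcap_configP _ I_ne).
  by exists E; split => // i; apply: generators_admissible.
by move=> h /(bigcap_configP _ I_ne)[E [E_adm ->]]; apply/gen_by_fam_act/gen_bigcap.
Qed.

End FinitelyGenerated.
End Configuration.

Lemma intersection_saturated_of_dyadic_homeo (G : (R -> R) -> Prop) :
  (forall f, dyadic_homeo f -> G f) -> intersection_saturated G.
Proof.
move=> G_dh n _ c; exists (config_subgroup c); split => [i | I I_ne].
  exact: config_subgroupP.
split; last exact: bigcap_fin_gen.
by case cI: (c I) => // I_fg; case: (bigcap_not_fin_gen I_ne cI).
Qed.

Theorem corollary3p1 :
  intersection_saturated thompsonF /\
  intersection_saturated thompsonT /\
  intersection_saturated thompsonV.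
Proof.
split; [|split]; apply: intersection_saturated_of_dyadic_homeo.
- exact: dyadic_homeo_thompsonF.
- exact: dyadic_homeo_thompsonT.
- exact: dyadic_homeo_thompsonV.
Qed.
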